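(* Let $X,H,M\ge1$ with $X^{1/3}\le H\le X$ and $M\le C_0X^{1/2}$ for a fixed constant $C_0$, and let $J$ be a subinterval of $(M,2M]$. Then there are constants $0<c_1<c_2$ and $C>0$ depending only on $C_0$ such that for any integer $Q$ with $\frac MH\le Q\le\frac M{(HX)^{1/4}}$, the set $\{(m,n)\in\mathbb Z^2:m\in J,\ X<nm\le X+H\}$ can be partitioned as $$\bigcup_{q=1}^Q\ \bigcup_{\substack{c_1\frac X{M^2}q\le a\le c_2\frac X{M^2}q\\ \gcd(a,q)=1}}\ \bigcup_{P\in\mathcal P_{a,q}}P,$$ where for each such coprime pair $(a,q)$, $\mathcal P_{a,q}$ is a family of at most $C\frac{M^3}{XQ^2q}$ arithmetic progressions $P$ contained in the set, each of spacing $(q,-a)$ and length at most $\frac{HQ}M$.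
   Context: An arithmetic progression in $\mathbb Z^2$ of spacing $v$ is a set $\{x_0+jv:0\le j<\ell\}$, with $\ell$ its length. *)

From Stdlib Require Import Reals ZArith List.

Definition in_AP (x0 v : Z * Z) (l : nat) (p : Z * Z) : Prop :=
  exists j : nat, (j < l)%nat /\
    p = (fst x0 + Z.of_nat j * fst v, snd x0 + Z.of_nat j * snd v)%Z.

Definition in_S (J : R -> Prop) (X H : R) (p : Z * Z) : Prop :=
  J (IZR (fst p)) /\ (X < IZR (fst p * snd p) <= X + H)%R.

Definition is_interval (J : R -> Prop) : Prop :=
  forall x y z : R, J x -> J z -> (x <= y <= z)%R -> J y.

Definition admissible (c1 c2 X M : R) (Q q a : Z) : Prop :=
  (1 <= q <= Q)%Z /\
  (c1 * X / M ^ 2 * IZR q <= IZR a <= c2 * X / M ^ 2 * IZR q)%R /\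
  Z.gcd a q = 1%Z.

(** Cut (M, 2M] into blocks of length W = M^3 / (4 X Q^2), on which X / m^2 varies by at
    most 1 / Q^2, and attach to each block a Dirichlet approximation a / q of X / m^2 with
    q <= Q. A point (m, n) whose block carries (q, a) lies on the line a m + q n = t;
    cutting these lines by block, by windows of q L consecutive values of m
    (L = floor (H Q / M)) and by the side of the vertex of m |-> m n gives convex pieces
    of lines, i.e. progressions of spacing (q, -a) and length at most L.
    To count the pieces for a fixed (q, a), note that t - g m lies in (0, eps), where
    g m = a m + q X / m and eps = q H / M, and that g' = a - q X / m^2 is O(1 / Q) on
    these points; hence they occupy an m-interval of length D = O(M^3 / (q X Q)) and
    O(beta) lines, beta = M^3 / (X Q^2 q). If eps >= 1/2, the number of windows times
    the number of lines per window is O(beta). Otherwise, on each side of the vertex of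
    g, convexity makes the m-range of a line at most eps / (1 - eps) times its distance
    to the previous line, so the ranges add up to O(eps D) plus the range of the first
    line, and again meet O(beta) windows. *)

From Stdlib Require Import Reals ZArith List Lia Lra Psatz ClassicalEpsilon.
Import ListNotations.
Open Scope R_scope.

Lemma Rabs_le_iff (x a : R) : Rabs x <= a <-> - a <= x <= a.
Proof. split; [|apply Rabs_le]. unfold Rabs. destruct (Rcase_abs x); lra. Qed.

Lemma Rdiv_le_iff (a b c : R) : 0 < c -> a / c <= b <-> a <= b * c.
Proof.
  intros Hc. split; intros H.
  - replace a with (a / c * c) by (field; lra). now apply Rmult_le_compat_r; [lra|].
  - replace b with (b * c / c) by (field; lra). unfold Rdiv.
    apply Rmult_le_compat_r; [apply Rlt_le, Rinv_0_lt_compat|]; lra.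
Qed.

Lemma Rdiv_le_mono_r (a b c : R) : 0 < c -> a <= b -> a / c <= b / c.
Proof.
  intros Hc Hab. unfold Rdiv.
  apply Rmult_le_compat_r; [apply Rlt_le, Rinv_0_lt_compat|]; lra.
Qed.

Lemma Rle_div_iff (a b c : R) : 0 < c -> a <= b / c <-> a * c <= b.
Proof.
  intros Hc. split; intros H.
  - replace b with (b / c * c) by (field; lra). now apply Rmult_le_compat_r; [lra|].
  - replace a with (a * c / c) by (field; lra). unfold Rdiv.
    apply Rmult_le_compat_r; [apply Rlt_le, Rinv_0_lt_compat|]; lra.
Qed.

Lemma pow_le_reg (n : nat) (u v : R) : (0 < n)%nat -> 0 <= u -> 0 <= v -> u ^ n <= v ^ n -> u <= v.
Proof.
  intros Hn Hu Hv Huv. destruct (Rle_lt_dec u v) as [|Hvu]; auto. exfalso.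
  assert (Hlt : forall k, (0 < k)%nat -> v ^ k < u ^ k).
  { induction k as [|k IH]; intros Hk; [lia|]. destruct k as [|k]; [simpl; lra|].
    change (v * v ^ S k < u * u ^ S k).
    pose proof (IH ltac:(lia)). pose proof (pow_le v (S k) Hv). nra. }
  specialize (Hlt n Hn). lra.
Qed.

Lemma INR_le_IZR (n : nat) (z : Z) : (Z.of_nat n <= z)%Z -> INR n <= IZR z.
Proof. intros H. rewrite INR_IZR_INZ. now apply IZR_le. Qed.

Lemma le_Int_part_iff (k : Z) (x : R) : (k <= Int_part x)%Z <-> IZR k <= x.
Proof.
  destruct (base_Int_part x) as [H1 H2]. split; intros Hk.
  - apply IZR_le in Hk. lra.
  - assert (Hlt : IZR k < IZR (Int_part x + 1)) by (rewrite plus_IZR; lra).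
    apply lt_IZR in Hlt. lia.
Qed.

Lemma Int_part_lt_iff (k : Z) (x : R) : (Int_part x < k)%Z <-> x < IZR k.
Proof.
  split; intros Hk.
  - destruct (Rlt_or_le x (IZR k)) as [Hx|Hx]; auto.
    apply le_Int_part_iff in Hx. lia.
  - destruct (Z_lt_le_dec (Int_part x) k) as [Hx|Hx]; auto.
    apply le_Int_part_iff in Hx. lra.
Qed.

Lemma Int_part_bounds (x : R) : IZR (Int_part x) <= x < IZR (Int_part x) + 1.
Proof. destruct (base_Int_part x). lra. Qed.

Lemma Int_part_le (x y : R) : x <= y -> (Int_part x <= Int_part y)%Z.
Proof. intros Hxy. apply le_Int_part_iff. pose proof (Int_part_bounds x). lra. Qed.

Lemma Zdiv_eq_close (m m' d : Z) : (0 < d)%Z -> (m / d = m' / d)%Z -> (Z.abs (m - m') < d)%Z.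
Proof.
  intros Hd E.
  pose proof (Z.div_mod m d ltac:(lia)). pose proof (Z.div_mod m' d ltac:(lia)).
  pose proof (Z.mod_pos_bound m d Hd). pose proof (Z.mod_pos_bound m' d Hd). nia.
Qed.

Lemma Zdiv_bounds (m d : Z) : (0 < d)%Z ->
  IZR d * IZR (m / d) <= IZR m < IZR d * IZR (m / d) + IZR d.
Proof.
  intros Hd. pose proof (Z.div_mod m d ltac:(lia)). pose proof (Z.mod_pos_bound m d Hd).
  rewrite <- mult_IZR, <- plus_IZR. split; [apply IZR_le | apply IZR_lt]; lia.
Qed.

Lemma Zdiv_diff_lt (u v d : Z) : (0 < d)%Z ->
  IZR (v / d) - IZR (u / d) < (IZR v - IZR u) / IZR d + 1.
Proof.
  intros Hd. assert (Hdr : 0 < IZR d) by (apply IZR_lt; lia).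
  pose proof (Zdiv_bounds v d Hd). pose proof (Zdiv_bounds u d Hd).
  apply (Rmult_lt_reg_l (IZR d)); auto.
  replace (IZR d * ((IZR v - IZR u) / IZR d + 1)) with (IZR v - IZR u + IZR d) by (field; lra).
  lra.
Qed.

Lemma Rpower_inv_pow (n : nat) (x : R) : (0 < n)%nat -> 0 < x -> Rpower x (/ INR n) ^ n = x.
Proof.
  intros Hn Hx. rewrite <- Rpower_pow by (unfold Rpower; apply exp_pos).
  rewrite Rpower_mult, Rinv_l, Rpower_1; auto. apply not_0_INR. lia.
Qed.

Lemma le_pow_of_Rpower_inv_le (n : nat) (x y : R) :
  (0 < n)%nat -> 0 < x -> Rpower x (/ INR n) <= y -> x <= y ^ n.
Proof.
  intros Hn Hx Hy. rewrite <- (Rpower_inv_pow n x) by auto.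
  apply pow_incr. split; [left; unfold Rpower; apply exp_pos | exact Hy].
Qed.

Lemma pow_mul_le_of_le_div_Rpower_inv (n : nat) (z m x : R) :
  (0 < n)%nat -> 0 < x -> 0 <= z -> z <= m / Rpower x (/ INR n) -> z ^ n * x <= m ^ n.
Proof.
  intros Hn Hx Hz Hzm. set (r := Rpower x (/ INR n)) in *.
  assert (Hr : 0 < r) by (unfold r, Rpower; apply exp_pos).
  apply Rle_div_iff in Hzm; [|exact Hr].
  rewrite <- (Rpower_inv_pow n x Hn Hx). fold r. rewrite <- Rpow_mult_distr.
  apply pow_incr. split; [nra | exact Hzm].
Qed.

Lemma sq_le_of_le_mul_sqrt (M C X : R) :
  0 <= M -> 0 <= X -> M <= C * sqrt X -> M ^ 2 <= Rmax C 1 ^ 2 * X.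
Proof.
  intros HM HX HMC. pose proof (Rmax_l C 1). pose proof (sqrt_pos X).
  assert (HMC' : M <= Rmax C 1 * sqrt X) by nra.
  assert (Hsq : M ^ 2 <= (Rmax C 1 * sqrt X) ^ 2) by (apply pow_incr; lra).
  rewrite Rpow_mult_distr, <- Rsqr_pow2 with (x := sqrt X), Rsqr_sqrt in Hsq by exact HX.
  exact Hsq.
Qed.

Definition Zrange (lo : Z) (n : nat) : list Z :=
  map (fun i => (lo + Z.of_nat i)%Z) (seq 0 n).

Lemma in_Zrange lo n x : In x (Zrange lo n) <-> (lo <= x < lo + Z.of_nat n)%Z.
Proof.
  unfold Zrange; rewrite in_map_iff; split.
  - intros [i [<- Hi]]. apply in_seq in Hi. lia.
  - intros Hx. exists (Z.to_nat (x - lo)). split; [lia|]. apply in_seq. lia.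
Qed.

Lemma NoDup_Zrange lo n : NoDup (Zrange lo n).
Proof.
  apply NoDup_map_NoDup_ForallPairs; [|apply seq_NoDup].
  intros i j _ _ E. lia.
Qed.

Lemma length_Zrange lo n : length (Zrange lo n) = n.
Proof. unfold Zrange. now rewrite length_map, length_seq. Qed.

Lemma Zrange_S lo n : Zrange lo (S n) = Zrange lo n ++ [(lo + Z.of_nat n)%Z].
Proof. unfold Zrange. now rewrite seq_S, map_app. Qed.

Lemma NoDup_Z_interval_length (l : list Z) (lo hi : Z) :
  (lo <= hi + 1)%Z -> NoDup l -> (forall x, In x l -> (lo <= x <= hi)%Z) ->
  (Z.of_nat (length l) <= hi - lo + 1)%Z.
Proof.
  intros Hle Hl Hrange.
  assert (Hincl : (length l <= length (Zrange lo (Z.to_nat (hi - lo + 1))))%nat).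
  { apply NoDup_incl_length; auto.
    intros x Hx. apply in_Zrange. specialize (Hrange x Hx). lia. }
  rewrite length_Zrange in Hincl. lia.
Qed.

Lemma NoDup_Z_spread_length (l : list Z) (D : R) :
  0 <= D -> NoDup l -> (forall x y, In x l -> In y l -> IZR (Z.abs (x - y)) <= D) ->
  INR (length l) <= 2 * D + 1.
Proof.
  intros HD Hl Hspread. destruct l as [|x0 l'] eqn:El; [simpl; lra|]. rewrite <- El in *.
  set (d := Int_part D).
  assert (Hd : (0 <= d)%Z) by (apply le_Int_part_iff; simpl; lra).
  assert (Hdr : IZR d <= D) by apply Int_part_bounds.
  assert (Hlen : (Z.of_nat (length l) <= x0 + d - (x0 - d) + 1)%Z).
  { apply NoDup_Z_interval_length; auto; [lia|].
    intros x Hx. assert (Hxd : (Z.abs (x - x0) <= d)%Z).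
    { apply le_Int_part_iff, Hspread; auto. rewrite El; now left. }
    lia. }
  apply INR_le_IZR in Hlen. rewrite plus_IZR, !minus_IZR, plus_IZR in Hlen. lra.
Qed.

Lemma NoDup_quotients_length (ks : list Z) (d lo hi : Z) :
  (0 < d)%Z -> (lo <= hi)%Z -> NoDup ks ->
  (forall k, In k ks -> exists m, (lo <= m <= hi)%Z /\ k = (m / d)%Z) ->
  INR (length ks) <= (IZR hi - IZR lo) / IZR d + 2.
Proof.
  intros Hd Hlh Hks Hk.
  assert (Hlen : (Z.of_nat (length ks) <= hi / d - lo / d + 1)%Z).
  { apply NoDup_Z_interval_length; auto.
    - pose proof (Z.div_le_mono lo hi d Hd Hlh). lia.
    - intros k Hin. destruct (Hk k Hin) as [m [Hm ->]].
      split; apply Z.div_le_mono; lia. }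
  apply INR_le_IZR in Hlen. rewrite plus_IZR, minus_IZR in Hlen.
  pose proof (Zdiv_diff_lt lo hi d Hd). lra.
Qed.

Lemma pigeonhole (f : nat -> Z) (N : nat) : (forall j, (0 <= f j < Z.of_nat N)%Z) ->
  exists i j, (i < j <= N)%nat /\ f i = f j.
Proof.
  intros Hf. apply NNPP. intros Hno.
  assert (Hnd : NoDup (map f (seq 0 (S N)))).
  { apply NoDup_map_NoDup_ForallPairs; [|apply seq_NoDup].
    intros i j Hi Hj Hij. apply in_seq in Hi, Hj.
    destruct (Nat.lt_total i j) as [Hlt|[Heq|Hlt]]; auto; exfalso; apply Hno.
    - exists i, j. split; [lia|auto].
    - exists j, i. split; [lia|auto]. }
  apply (NoDup_incl_length (l' := Zrange 0 N)) in Hnd.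
  - rewrite length_map, length_seq, length_Zrange in Hnd. lia.
  - intros z Hz. apply in_map_iff in Hz as [j [<- _]]. apply in_Zrange. specialize (Hf j). lia.
Qed.

Lemma Z_has_min (P : Z -> Prop) (lo : Z) :
  (exists u, P u) -> (forall u, P u -> (lo <= u)%Z) ->
  exists x, P x /\ forall u, P u -> (x <= u)%Z.
Proof.
  intros [u Pu] Hlo.
  destruct (dec_inh_nat_subset_has_unique_least_element (fun n => P (lo + Z.of_nat n)%Z))
    as [n [[Pn Hmin] _]].
  - intros n. apply classic.
  - exists (Z.to_nat (u - lo)). specialize (Hlo u Pu).
    now replace (lo + Z.of_nat (Z.to_nat (u - lo)))%Z with u by lia.
  - exists (lo + Z.of_nat n)%Z. split; auto. intros v Pv.
    specialize (Hlo v Pv). specialize (Hmin (Z.to_nat (v - lo))).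
    replace (lo + Z.of_nat (Z.to_nat (v - lo)))%Z with v in Hmin by lia.
    specialize (Hmin Pv). lia.
Qed.

Lemma Z_bounded_extremes (P : Z -> Prop) (lo hi : Z) :
  (exists u, P u) -> (forall u, P u -> (lo <= u <= hi)%Z) ->
  exists x y, P x /\ P y /\ forall u, P u -> (x <= u <= y)%Z.
Proof.
  intros [u Pu] Hb.
  destruct (Z_has_min P lo) as [x [Px Hx]]; [eauto | intros v Pv; now destruct (Hb v Pv)|].
  destruct (Z_has_min (fun v => P (- v)%Z) (- hi)) as [y [Py Hy]].
  - exists (- u)%Z. now rewrite Z.opp_involutive.
  - intros v Pv. specialize (Hb _ Pv). lia.
  - exists x, (- y)%Z. split; [exact Px|]. split; [exact Py|].
    intros v Pv. split; [now apply Hx|].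
    specialize (Hy (- v)%Z). rewrite Z.opp_involutive in Hy. specialize (Hy Pv). lia.
Qed.

Fixpoint sumR (l : list R) : R := match l with [] => 0 | x :: r => x + sumR r end.

Lemma sumR_app l1 l2 : sumR (l1 ++ l2) = sumR l1 + sumR l2.
Proof. induction l1; simpl; lra. Qed.

Lemma sumR_map_plus {A} (f g : A -> R) l :
  sumR (map (fun x => f x + g x) l) = sumR (map f l) + sumR (map g l).
Proof. induction l; simpl; lra. Qed.

Lemma sumR_map_le_const {A} (f : A -> R) (l : list A) (B : R) :
  (forall x, In x l -> f x <= B) -> sumR (map f l) <= INR (length l) * B.
Proof.
  induction l as [|x l IH]; intros Hf; cbn [map sumR length]; [simpl; lra|].
  rewrite S_INR.
  assert (f x <= B) by (apply Hf; now left).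
  assert (sumR (map f l) <= INR (length l) * B) by (apply IH; intros; apply Hf; now right).
  lra.
Qed.

Lemma sumR_indicator (Ks : list Z) (k0 : Z) :
  NoDup Ks -> In k0 Ks -> sumR (map (fun k => if Z.eqb k0 k then 1 else 0) Ks) = 1.
Proof.
  induction Ks as [|k Ks IH]; simpl; intros Hn Hin; [contradiction|].
  inversion Hn as [|? ? Hk Hn']; subst.
  destruct (Z.eqb_spec k0 k) as [->|Hne].
  - assert (Hz : sumR (map (fun k' => if Z.eqb k k' then 1 else 0) Ks) = 0).
    { clear IH Hn Hn' Hin. induction Ks as [|k' Ks IHk]; simpl; auto.
      destruct (Z.eqb_spec k k') as [->|_]; [simpl in Hk; tauto|].
      rewrite IHk; [lra|]. simpl in Hk; tauto. }
    lra.
  - destruct Hin as [->|Hin]; [contradiction|]. rewrite IH; auto. lra.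
Qed.

Lemma length_as_sum_of_fibers {A} (key : A -> Z) (l : list A) (Ks : list Z) :
  NoDup Ks -> (forall x, In x l -> In (key x) Ks) ->
  INR (length l) = sumR (map (fun k => INR (length (filter (fun x => Z.eqb (key x) k) l))) Ks).
Proof.
  intros HKs. induction l as [|x l IH]; intros Hin; cbn [length filter].
  - clear. induction Ks; cbn [map sumR]; auto. rewrite <- IHKs. simpl. lra.
  - rewrite S_INR, IH by (intros; apply Hin; now right).
    rewrite <- (sumR_indicator Ks (key x) HKs (Hin x (or_introl eq_refl))), <- sumR_map_plus.
    f_equal. apply map_ext. intros k.
    destruct (Z.eqb (key x) k); cbn [length]; try rewrite S_INR; lra.
Qed.

Lemma NoDup_map_snd_fiber (l : list (Z * Z)) (t : Z) :
  NoDup l -> NoDup (map snd (filter (fun x => Z.eqb (fst x) t) l)).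
Proof.
  intros Hl. apply NoDup_map_NoDup_ForallPairs; [|now apply NoDup_filter].
  intros [t1 k1] [t2 k2] H1 H2 E. apply filter_In in H1 as [_ H1], H2 as [_ H2].
  apply Z.eqb_eq in H1, H2. cbn in *. congruence.
Qed.

Lemma NoDup_map_fst_fiber (l : list (Z * Z)) (k : Z) :
  NoDup l -> NoDup (map fst (filter (fun x => Z.eqb (snd x) k) l)).
Proof.
  intros Hl. apply NoDup_map_NoDup_ForallPairs; [|now apply NoDup_filter].
  intros [t1 k1] [t2 k2] H1 H2 E. apply filter_In in H1 as [_ H1], H2 as [_ H2].
  apply Z.eqb_eq in H1, H2. cbn in *. congruence.
Qed.

Lemma length_flat_map_const {A B} (f : A -> list B) (l : list A) (c : nat) :
  (forall x, length (f x) = c) -> length (flat_map f l) = (c * length l)%nat.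
Proof. intros Hf. induction l; simpl; [lia|]. rewrite length_app, Hf, IHl. lia. Qed.

Definition pair_eq_dec : forall x y : Z * Z, {x = y} + {x <> y}.
Proof. repeat decide equality. Defined.

Definition decide (P : Prop) : bool := if excluded_middle_informative P then true else false.

Lemma decide_spec (P : Prop) : decide P = true <-> P.
Proof. unfold decide. destruct (excluded_middle_informative P); split; auto; discriminate. Qed.

(** * Dirichlet approximation *)

Lemma dirichlet_approximation (alpha : R) (Q : Z) : (1 <= Q)%Z ->
  exists q a, (1 <= q <= Q)%Z /\ Rabs (IZR q * alpha - IZR a) < 1 / IZR Q.
Proof.
  intros HQ.
  assert (HQr : 1 <= IZR Q) by (apply IZR_le; lia).
  set (fr := fun j : nat => INR j * alpha - IZR (Int_part (INR j * alpha))).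
  set (box := fun j : nat => Int_part (IZR Q * fr j)).
  assert (Hfr : forall j, 0 <= fr j < 1).
  { intros j. unfold fr. pose proof (Int_part_bounds (INR j * alpha)). lra. }
  assert (Hbox : forall j, (0 <= box j < Q)%Z).
  { intros j. specialize (Hfr j). unfold box. split.
    - apply le_Int_part_iff. simpl. nra.
    - apply Int_part_lt_iff. nra. }
  destruct (pigeonhole box (Z.to_nat Q)) as [i [j [Hij Hb]]];
    [intros j; rewrite Z2Nat.id by lia; apply Hbox|].
  exists (Z.of_nat j - Z.of_nat i)%Z, (Int_part (INR j * alpha) - Int_part (INR i * alpha))%Z.
  split; [lia|].
  replace (IZR (Z.of_nat j - Z.of_nat i) * alpha
             - IZR (Int_part (INR j * alpha) - Int_part (INR i * alpha)))
    with (fr j - fr i) by (unfold fr; rewrite !minus_IZR, <- !INR_IZR_INZ; ring).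
  pose proof (Int_part_bounds (IZR Q * fr i)) as Bi.
  pose proof (Int_part_bounds (IZR Q * fr j)) as Bj.
  change (Int_part (IZR Q * fr i)) with (box i) in Bi.
  change (Int_part (IZR Q * fr j)) with (box j) in Bj.
  rewrite Hb in Bi.
  assert (Hd : Rabs (IZR Q * fr j - IZR Q * fr i) < 1) by (apply Rabs_def1; lra).
  replace (IZR Q * fr j - IZR Q * fr i) with (IZR Q * (fr j - fr i)) in Hd by ring.
  rewrite Rabs_mult, Rabs_right in Hd by lra.
  apply (Rmult_lt_reg_l (IZR Q)); [lra|].
  now replace (IZR Q * (1 / IZR Q)) with 1 by (field; lra).
Qed.

Lemma coprime_approximation (alpha delta : R) (q a : Z) :
  (1 <= q)%Z -> Rabs (IZR q * alpha - IZR a) <= delta ->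
  exists q' a', (1 <= q' <= q)%Z /\ Z.gcd a' q' = 1%Z /\ Rabs (IZR q' * alpha - IZR a') <= delta.
Proof.
  intros Hq Happrox. set (g := Z.gcd a q).
  assert (Hg : (0 < g)%Z).
  { assert (g <> 0%Z) by (intro E; apply Z.gcd_eq_0 in E; lia).
    pose proof (Z.gcd_nonneg a q). lia. }
  destruct (Z.gcd_divide_l a q) as [a' Ea]. destruct (Z.gcd_divide_r a q) as [q' Eq].
  fold g in Ea, Eq.
  exists q', a'. split; [nia|]. split.
  - pose proof (Z.gcd_div_gcd a q g ltac:(lia) eq_refl) as Hcop.
    now rewrite Ea, Eq, !Z.div_mul in Hcop by lia.
  - assert (E : IZR q * alpha - IZR a = IZR g * (IZR q' * alpha - IZR a'))
      by (rewrite Ea, Eq, !mult_IZR; ring).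
    rewrite E, Rabs_mult, Rabs_right in Happrox by (apply Rle_ge, IZR_le; lia).
    assert (1 <= IZR g) by (apply IZR_le; lia).
    pose proof (Rabs_pos (IZR q' * alpha - IZR a')). nra.
Qed.

Lemma positive_coprime_approximation (alpha K : R) (Q : Z) :
  (1 <= Q)%Z -> 1 <= K -> 1 / K <= alpha ->
  exists q a, (1 <= q <= Q)%Z /\ (1 <= a)%Z /\ Z.gcd a q = 1%Z /\
    Rabs (IZR q * alpha - IZR a) <= K / IZR Q.
Proof.
  intros HQ HK Halpha.
  assert (HQr : 1 <= IZR Q) by (apply IZR_le; lia).
  assert (Hinv : 1 / IZR Q <= 1) by (apply Rdiv_le_iff; lra).
  assert (HKQ : 1 / IZR Q <= K / IZR Q) by (apply Rdiv_le_mono_r; lra).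
  assert (Hpos : 0 < alpha) by (assert (0 < 1 / K) by (apply Rdiv_lt_0_compat; lra); lra).
  destruct (dirichlet_approximation alpha Q HQ) as [q0 [a0 [Hq0 H0]]].
  destruct (coprime_approximation alpha (1 / IZR Q) q0 a0) as [q [a [Hq [Hcop Happrox]]]];
    [lia|lra|].
  assert (Hqr : 1 <= IZR q) by (apply IZR_le; lia).
  apply Rabs_le_iff in Happrox.
  assert (Ha : (0 <= a)%Z) by (assert (Hlt : IZR (-1) < IZR a) by nra; apply lt_IZR in Hlt; lia).
  destruct (Z.eq_dec a 0) as [->|Ha0].
  - (* Then q = 1 and alpha <= 1 / Q, so Q <= K and (1, 1) is a good enough approximation. *)
    rewrite Z.gcd_0_l in Hcop. assert (q = 1)%Z as -> by lia.
    exists 1%Z, 1%Z. split; [lia|]. split; [lia|]. split; [reflexivity|].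
    simpl in Happrox.
    assert (HaQ : alpha * IZR Q <= 1).
    { replace 1 with (1 / IZR Q * IZR Q) by (field; lra). apply Rmult_le_compat_r; lra. }
    assert (HaK : 1 <= alpha * K).
    { replace 1 with (1 / K * K) by (field; lra). apply Rmult_le_compat_r; lra. }
    assert (HQK : IZR Q <= K) by nra.
    assert (1 <= K / IZR Q) by (apply Rle_div_iff; lra).
    rewrite Rabs_left1; simpl in *; lra.
  - exists q, a. split; [lia|]. split; [lia|]. split; auto. apply Rabs_le. lra.
Qed.

(** * Lattice points on a line *)

Lemma line_segment_is_AP (q a : Z) (L : nat) (Pc : Z * Z -> Prop) (p0 : Z * Z) :
  (1 <= q)%Z -> Z.gcd q a = 1%Z -> Pc p0 ->
  (forall p, Pc p -> (a * fst p + q * snd p = a * fst p0 + q * snd p0)%Z) ->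
  (forall p p', Pc p -> Pc p' -> (Z.abs (fst p - fst p') < q * Z.of_nat L)%Z) ->
  (forall j1 j2 j, Pc (fst p0 + j1 * q, snd p0 - j1 * a)%Z ->
     Pc (fst p0 + j2 * q, snd p0 - j2 * a)%Z -> (j1 <= j <= j2)%Z ->
     Pc (fst p0 + j * q, snd p0 - j * a)%Z) ->
  exists x0 l, (1 <= l <= L)%nat /\ forall p, Pc p <-> in_AP x0 (q, - a)%Z l p.
Proof.
  intros Hq Hcop H0 Hline Hwidth Hconv.
  destruct p0 as [m0 n0]; simpl in *.
  set (onP := fun j => Pc (m0 + j * q, n0 - j * a)%Z).
  assert (Hshift : forall p, Pc p -> exists j, p = (m0 + j * q, n0 - j * a)%Z).
  { intros [m n] Hp. specialize (Hline _ Hp). simpl in Hline.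
    assert (Hd : (q | a * (m - m0))%Z) by (exists (n0 - n)%Z; lia).
    apply Z.gauss in Hd; auto. destruct Hd as [j Hj]. exists j.
    assert (Hn : (q * (n0 - n) = q * (j * a))%Z) by nia.
    apply Z.mul_reg_l in Hn; [|lia]. f_equal; lia. }
  assert (Hgap : forall j j', onP j -> onP j' -> (Z.abs (j - j') < Z.of_nat L)%Z).
  { intros j j' Hj Hj'. specialize (Hwidth _ _ Hj Hj'). simpl in Hwidth.
    replace (m0 + j * q - (m0 + j' * q))%Z with ((j - j') * q)%Z in Hwidth by ring.
    rewrite Z.abs_mul, (Z.abs_eq q) in Hwidth by lia. nia. }
  assert (Hon0 : onP 0%Z) by (unfold onP; now rewrite Z.mul_0_l, Z.add_0_r, Z.sub_0_r).
  destruct (Z_bounded_extremes onP (- Z.of_nat L) (Z.of_nat L))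
    as [jmin [jmax [Hmin [Hmax Hext]]]]; [eauto| intros j Hj; specialize (Hgap j 0%Z Hj Hon0); lia|].
  pose proof (Hext jmin Hmin). pose proof (Hgap jmax jmin Hmax Hmin).
  exists (m0 + jmin * q, n0 - jmin * a)%Z, (Z.to_nat (jmax - jmin + 1)).
  split; [lia|]. intros p. split.
  - intros Hp. destruct (Hshift p Hp) as [j ->]. destruct (Hext j Hp).
    exists (Z.to_nat (j - jmin)). split; [lia|]. simpl. rewrite Z2Nat.id by lia. f_equal; lia.
  - intros [i [Hi ->]]. simpl.
    assert (Hon : onP (jmin + Z.of_nat i)%Z) by (apply (Hconv jmin jmax); auto; lia).
    unfold onP in Hon.
    replace (m0 + jmin * q + Z.of_nat i * q)%Z with (m0 + (jmin + Z.of_nat i) * q)%Z by ring.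
    now replace (n0 - jmin * a + Z.of_nat i * - a)%Z with (n0 - (jmin + Z.of_nat i) * a)%Z by ring.
Qed.

Lemma in_AP_start (x0 v : Z * Z) (l : nat) : (1 <= l)%nat -> in_AP x0 v l x0.
Proof. intros Hl. exists 0%nat. split; [lia|]. destruct x0; cbn. f_equal; lia. Qed.

Lemma line_products_monotone (q a t m1 n1 m n m2 n2 : Z) :
  (0 < q)%Z -> (0 <= a)%Z ->
  (a * m1 + q * n1 = t)%Z -> (a * m + q * n = t)%Z -> (a * m2 + q * n2 = t)%Z ->
  (m1 <= m <= m2)%Z ->
  ((2 * a * m2 <= t)%Z -> (m1 * n1 <= m * n <= m2 * n2)%Z) /\
  ((t < 2 * a * m1)%Z -> (m2 * n2 <= m * n <= m1 * n1)%Z).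
Proof.
  intros Hq Ha E1 E E2 Hm.
  assert (P1 : (q * (m1 * n1) = m1 * (t - a * m1))%Z) by (rewrite <- E1; ring).
  assert (P : (q * (m * n) = m * (t - a * m))%Z) by (rewrite <- E; ring).
  assert (P2 : (q * (m2 * n2) = m2 * (t - a * m2))%Z) by (rewrite <- E2; ring).
  assert (D1 : (q * (m * n - m1 * n1) = (m - m1) * (t - a * (m1 + m)))%Z)
    by (rewrite Z.mul_sub_distr_l, P, P1; ring).
  assert (D2 : (q * (m2 * n2 - m * n) = (m2 - m) * (t - a * (m + m2)))%Z)
    by (rewrite Z.mul_sub_distr_l, P, P2; ring).
  split; intros Ht.
  - assert (0 <= (m - m1) * (t - a * (m1 + m)))%Z by (apply Z.mul_nonneg_nonneg; nia).
    assert (0 <= (m2 - m) * (t - a * (m + m2)))%Z by (apply Z.mul_nonneg_nonneg; nia).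
    split; nia.
  - assert ((m - m1) * (t - a * (m1 + m)) <= 0)%Z by (apply Z.mul_nonneg_nonpos; nia).
    assert ((m2 - m) * (t - a * (m + m2)) <= 0)%Z by (apply Z.mul_nonneg_nonpos; nia).
    split; nia.
Qed.

(** * The function x |-> A x + K / x *)

Definition hyperbolic (A K x : R) : R := A * x + K / x.

Lemma hyperbolic_sub A K x y : 0 < x -> 0 < y ->
  hyperbolic A K y - hyperbolic A K x = (y - x) * (A - K / (x * y)).
Proof. intros. unfold hyperbolic. field. lra. Qed.

Lemma hyperbolic_three_slope A K p x y : 0 < p -> p <= x -> x <= y -> 0 <= K ->
  (hyperbolic A K x - hyperbolic A K p) * (y - x) <= (hyperbolic A K y - hyperbolic A K x) * (x - p).
Proof.
  intros Hp Hpx Hxy HK. rewrite !hyperbolic_sub by lra.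
  assert (K / (x * y) <= K / (p * x)).
  { unfold Rdiv. apply Rmult_le_compat_l; auto. apply Rinv_le_contravar; nra. }
  assert (0 <= (x - p) * (y - x)) by nra. nra.
Qed.

Lemma hyperbolic_le_ascending A K x y : 0 < x -> x <= y -> 0 <= K -> K <= A * x ^ 2 ->
  hyperbolic A K x <= hyperbolic A K y.
Proof.
  intros Hx Hxy HK0 HK.
  assert (K / (x * y) <= A) by (apply Rdiv_le_iff; nra).
  pose proof (hyperbolic_sub A K x y Hx ltac:(lra)). nra.
Qed.

Lemma hyperbolic_le_descending A K x y : 0 < x -> x <= y -> 0 <= A -> A * y ^ 2 <= K ->
  hyperbolic A K y <= hyperbolic A K x.
Proof.
  intros Hx Hxy HA HK.
  assert (A * (x * y) <= A * y ^ 2) by (apply Rmult_le_compat_l; nra).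
  assert (A <= K / (x * y)) by (apply Rle_div_iff; nra).
  pose proof (hyperbolic_sub A K x y Hx ltac:(lra)). nra.
Qed.

Lemma hyperbolic_tangent_ascending A K x y : 0 < x -> x <= y -> K <= A * x ^ 2 ->
  A * (y - x) ^ 2 <= y * (hyperbolic A K y - hyperbolic A K x).
Proof.
  intros Hx Hxy HK. rewrite hyperbolic_sub by lra.
  assert (y * (K / (x * y)) <= A * x).
  { replace (y * (K / (x * y))) with (K / x) by (field; lra). apply Rdiv_le_iff; nra. }
  nra.
Qed.

Lemma hyperbolic_tangent_descending A K x y : 0 < x -> x <= y -> A * y ^ 2 <= K ->
  A * (y - x) ^ 2 <= x * (hyperbolic A K x - hyperbolic A K y).
Proof.
  intros Hx Hxy HK.
  replace (hyperbolic A K x - hyperbolic A K y) with (- (hyperbolic A K y - hyperbolic A K x)) by ring.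
  rewrite hyperbolic_sub by lra.
  assert (A * y <= x * (K / (x * y))).
  { replace (x * (K / (x * y))) with (K / y) by (field; lra). apply Rle_div_iff; nra. }
  nra.
Qed.

Lemma hyperbolic_lipschitz A K E m m' : 0 < m -> m <= m' -> 0 <= K ->
  Rabs (K / m ^ 2 - A) <= E -> Rabs (K / m' ^ 2 - A) <= E ->
  Rabs (hyperbolic A K m' - hyperbolic A K m) <= E * (m' - m).
Proof.
  intros Hm Hmm' HK H1 H2. rewrite hyperbolic_sub by lra.
  apply Rabs_le_iff in H1. apply Rabs_le_iff in H2.
  assert (K / m' ^ 2 <= K / (m * m'))
    by (unfold Rdiv; apply Rmult_le_compat_l; auto; apply Rinv_le_contravar; nra).
  assert (K / (m * m') <= K / m ^ 2)
    by (unfold Rdiv; apply Rmult_le_compat_l; auto; apply Rinv_le_contravar; nra).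
  rewrite Rabs_mult, (Rabs_right (m' - m)), Rmult_comm by lra.
  apply Rmult_le_compat_r; [lra|]. apply Rabs_le. lra.
Qed.

Lemma hyperbolic_flat_region_width A K E M m m' :
  0 < M -> M < m -> m <= m' -> m' <= 2 * M -> 0 < K ->
  Rabs (K / m ^ 2 - A) <= E -> Rabs (K / m' ^ 2 - A) <= E ->
  m' - m <= 16 * E * M ^ 3 / K.
Proof.
  intros HM H1 H2 H3 HK E1 E2. apply Rabs_le_iff in E1. apply Rabs_le_iff in E2.
  assert (Id : (K / m ^ 2 - K / m' ^ 2) * (m ^ 2 * m' ^ 2) = K * (m' - m) * (m + m'))
    by (field; lra).
  assert (Hprod : m ^ 2 * m' ^ 2 <= 16 * M ^ 4).
  { replace (16 * M ^ 4) with ((4 * M ^ 2) * (4 * M ^ 2)) by ring.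
    apply Rmult_le_compat; nra. }
  assert (Hdiff : 0 <= K / m ^ 2 - K / m' ^ 2 <= 2 * E).
  { split; [|lra]. unfold Rdiv. assert (/ m' ^ 2 <= / m ^ 2) by (apply Rinv_le_contravar; nra). nra. }
  assert (Hup : K * (m' - m) * (m + m') <= 2 * E * (16 * M ^ 4)).
  { rewrite <- Id. apply Rmult_le_compat; [lra | apply Rmult_le_pos; apply pow_le; lra | lra | exact Hprod]. }
  assert (Hlow : K * (m' - m) * (2 * M) <= K * (m' - m) * (m + m'))
    by (apply Rmult_le_compat_l; nra).
  apply Rle_div_iff; auto. apply Rmult_le_reg_r with (2 * M); lra.
Qed.

(** Lines [t] are visited in increasing order: by [chain], the spread of the points of a
    line is at most [c] times its distance to the previous nonempty line, and these
    distances add up to at most [D]. *)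

Section ChainSum.

Variables (P : Z -> Z -> Prop) (cnt : Z -> R) (w S c D : R).
Hypotheses (Hw : 0 < w) (Hc : 0 <= c) (HS : 0 <= S) (HD : 0 <= D).
Hypothesis cnt_empty : forall t, ~ (exists u, P t u) -> cnt t = 0.
Hypothesis cnt_span : forall t, (exists u, P t u) ->
  exists x y, P t x /\ P t y /\ (x <= y)%Z /\ cnt t <= (IZR y - IZR x) / w + 2.
Hypothesis chain : forall t' t p x y, P t' p -> P t x -> P t y -> (t' < t)%Z -> (x <= y)%Z ->
  IZR y - IZR x <= c * (IZR x - IZR p).
Hypothesis span : forall t x y, P t x -> P t y -> (x <= y)%Z -> IZR y - IZR x <= S.
Hypothesis diam : forall t t' x y, P t x -> P t' y -> IZR x - IZR y <= D.

Lemma sum_counts_chain_invariant (T0 : Z) (n : nat) :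
  sumR (map cnt (Zrange T0 n)) = 0 \/
  exists tf f tz z, P tf f /\ P tz z /\ (tz < T0 + Z.of_nat n)%Z /\
    sumR (map cnt (Zrange T0 n)) <= 2 * INR n + (S + c * (IZR z - IZR f)) / w.
Proof.
  induction n as [|n IH]; [now left|].
  rewrite Zrange_S, map_app, sumR_app. cbn [map sumR]. rewrite S_INR.
  set (t := (T0 + Z.of_nat n)%Z). pose proof (pos_INR n).
  destruct (classic (exists u, P t u)) as [Ht|Ht].
  - destruct (cnt_span t Ht) as [x [y [Px [Py [Hxy Hcnt]]]]].
    assert (Hxy' : IZR x <= IZR y) by (apply IZR_le; auto).
    right. destruct IH as [Hs|[tf [f [tz [z [Pf [Pz [Htz Hs]]]]]]]].
    + exists t, x, t, y. do 3 (split; [auto; lia|]).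
      assert (IZR y - IZR x <= S) by (apply (span t); auto).
      assert ((IZR y - IZR x) / w <= (S + c * (IZR y - IZR x)) / w)
        by (apply Rdiv_le_mono_r; nra).
      lra.
    + exists tf, f, t, y. do 3 (split; [auto; lia|]).
      assert (IZR y - IZR x <= c * (IZR x - IZR z)) by (apply (chain tz t z x y); auto; lia).
      assert (E : (S + c * (IZR z - IZR f)) / w + (IZR y - IZR x) / w
                  = (S + c * (IZR z - IZR f) + (IZR y - IZR x)) / w) by (field; lra).
      assert ((S + c * (IZR z - IZR f) + (IZR y - IZR x)) / w <= (S + c * (IZR y - IZR f)) / w)
        by (apply Rdiv_le_mono_r; nra).
      lra.
  - rewrite (cnt_empty t Ht).
    destruct IH as [Hs|[tf [f [tz [z [Pf [Pz [Htz Hs]]]]]]]]; [left; lra|].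
    right. exists tf, f, tz, z. do 3 (split; [auto; lia|]). lra.
Qed.

Lemma sum_counts_chain_le (T0 : Z) (n : nat) :
  sumR (map cnt (Zrange T0 n)) <= 2 * INR n + (S + c * D) / w.
Proof.
  pose proof (pos_INR n).
  assert (0 <= (S + c * D) / w) by (apply Rle_div_iff; nra).
  destruct (sum_counts_chain_invariant T0 n) as [Hs|[tf [f [tz [z [Pf [Pz [_ Hs]]]]]]]]; [lra|].
  pose proof (diam tz tf z f Pz Pf).
  assert ((S + c * (IZR z - IZR f)) / w <= (S + c * D) / w) by (apply Rdiv_le_mono_r; nra).
  lra.
Qed.

End ChainSum.

Definition c_low (K0 : R) : R := 1 / (4 * (K0 + 2)).
Definition c_high (K0 : R) : R := 1 + K0 * (K0 + 1).

Lemma c_low_high_bounds (K0 : R) : 1 <= K0 -> 0 < c_low K0 <= 1 /\ c_low K0 < c_high K0.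
Proof.
  intros HK. unfold c_low, c_high.
  assert (0 < 1 / (4 * (K0 + 2))) by (apply Rdiv_lt_0_compat; lra).
  assert (1 / (4 * (K0 + 2)) <= 1) by (apply Rdiv_le_iff; lra).
  split; [split|]; nra.
Qed.

Section Partition.

Variables (X H M K0 : R) (J : R -> Prop) (Q : Z).
Hypotheses (HX : 1 <= X) (HH : 1 <= H) (HM : 1 <= M) (HK0 : 1 <= K0).
Hypothesis HMX : 4 * M ^ 2 <= K0 * X.
Hypothesis HXH : X <= H ^ 3.
Hypothesis HQlo : M <= H * IZR Q.
Hypothesis HQhi : IZR Q ^ 4 * (H * X) <= M ^ 4.
Hypothesis HJ : is_interval J.
Hypothesis HJM : forall x, J x -> M < x <= 2 * M.

Lemma Q_ge1 : 1 <= IZR Q.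
Proof.
  assert (Hpos : 0 < IZR Q) by (apply (Rmult_lt_reg_l H); lra).
  apply lt_IZR in Hpos. apply IZR_le. lia.
Qed.

Lemma XQ2_le_HM2 : X * IZR Q ^ 2 <= H * M ^ 2.
Proof.
  pose proof Q_ge1.
  apply (pow_le_reg 2); [lia| apply Rmult_le_pos; [|apply pow_le]; lra
                          | apply Rmult_le_pos; [|apply pow_le]; lra |].
  replace ((X * IZR Q ^ 2) ^ 2) with (X * (IZR Q ^ 4 * X)) by ring.
  replace ((H * M ^ 2) ^ 2) with (H ^ 2 * M ^ 4) by ring.
  assert (Hq : IZR Q ^ 4 * X <= M ^ 4 / H) by (apply Rle_div_iff; lra).
  assert (HXH2 : X / H <= H ^ 2) by (apply Rdiv_le_iff; lra).
  apply Rle_trans with (X * (M ^ 4 / H)); [apply Rmult_le_compat_l; lra|].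
  replace (X * (M ^ 4 / H)) with (X / H * M ^ 4) by (field; lra).
  apply Rmult_le_compat_r; [apply pow_le|]; lra.
Qed.

Lemma XQ3_le_M3 : X * IZR Q ^ 3 <= M ^ 3.
Proof.
  pose proof Q_ge1.
  assert (Hq4 : IZR Q ^ 4 <= M ^ 4 / (H * X)) by (apply Rle_div_iff; nra).
  assert (Hq12 : (IZR Q ^ 4) ^ 3 <= (M ^ 4 / (H * X)) ^ 3)
    by (apply pow_incr; split; [apply pow_le|]; lra).
  assert (E : X ^ 4 * (M ^ 4 / (H * X)) ^ 3 = X / H ^ 3 * (M ^ 3) ^ 4) by (field; nra).
  assert (X / H ^ 3 <= 1) by (apply Rdiv_le_iff; nra).
  apply (pow_le_reg 4); [lia|nra|apply pow_le; lra|].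
  replace ((X * IZR Q ^ 3) ^ 4) with (X ^ 4 * (IZR Q ^ 4) ^ 3) by ring.
  apply Rle_trans with (X ^ 4 * (M ^ 4 / (H * X)) ^ 3).
  - apply Rmult_le_compat_l; auto. apply pow_le; lra.
  - rewrite E. pose proof (pow_le (M ^ 3) 4 ltac:(apply pow_le; lra)). nra.
Qed.

Definition L : nat := Z.to_nat (Int_part (H * IZR Q / M)).

Lemma HQ_over_M_ge1 : 1 <= H * IZR Q / M.
Proof. apply Rle_div_iff; lra. Qed.

Lemma INR_L : INR L = IZR (Int_part (H * IZR Q / M)).
Proof.
  unfold L. rewrite INR_IZR_INZ, Z2Nat.id; auto.
  apply le_Int_part_iff. pose proof HQ_over_M_ge1. simpl. lra.
Qed.

Lemma L_ge1 : (1 <= L)%nat.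
Proof.
  apply INR_le. rewrite INR_L. simpl.
  apply IZR_le, le_Int_part_iff, HQ_over_M_ge1.
Qed.

Lemma L_le : INR L <= H * IZR Q / M.
Proof. rewrite INR_L. apply Int_part_bounds. Qed.

Lemma L_ge : H * IZR Q / (2 * M) <= INR L.
Proof.
  pose proof (Int_part_bounds (H * IZR Q / M)). pose proof (le_INR _ _ L_ge1) as HL.
  rewrite INR_L in *. simpl in HL.
  replace (H * IZR Q / (2 * M)) with (H * IZR Q / M / 2) by (field; lra). lra.
Qed.

Definition W : R := M ^ 3 / (4 * X * IZR Q ^ 2).

Lemma W_pos : 0 < W.
Proof. pose proof Q_ge1. unfold W. apply Rdiv_lt_0_compat; [apply pow_lt|]; nra. Qed.

Definition block (m : Z) : Z := Int_part ((IZR m - M) / W).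
Definition block_start (b : Z) : R := M + IZR b * W.

Lemma block_start_spec (m : Z) : M < IZR m ->
  M <= block_start (block m) <= IZR m /\ IZR m < block_start (block m) + W.
Proof.
  intros Hm. pose proof W_pos. unfold block_start, block.
  pose proof (Int_part_bounds ((IZR m - M) / W)) as [B1 B2].
  set (b := Int_part ((IZR m - M) / W)) in *.
  assert (0 <= IZR b) by (apply IZR_le, le_Int_part_iff, Rle_div_iff; lra).
  apply Rle_div_iff in B1; [|lra].
  assert (IZR m - M < (IZR b + 1) * W).
  { apply Rmult_lt_compat_r with (r := W) in B2; [|lra].
    now replace ((IZR m - M) / W * W) with (IZR m - M) in B2 by (field; lra). }
  nra.
Qed.

Lemma block_mono (m m' : Z) : (m <= m')%Z -> (block m <= block m')%Z.
Proof.
  intros Hmm. apply Int_part_le, Rdiv_le_mono_r; [apply W_pos|].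
  apply IZR_le in Hmm. lra.
Qed.

Lemma block_variation (r m : R) : M <= r -> r <= m -> m < r + W -> m <= 2 * M ->
  0 <= X / r ^ 2 - X / m ^ 2 <= 1 / IZR Q ^ 2.
Proof.
  intros H1 H2 H3 H4. pose proof W_pos. pose proof Q_ge1.
  assert (E : (X / r ^ 2 - X / m ^ 2) * (r ^ 2 * m ^ 2) = X * (m - r) * (m + r)) by (field; lra).
  assert (EW : 4 * X * W * IZR Q ^ 2 = M ^ 3) by (unfold W; field; nra).
  set (u := X / r ^ 2 - X / m ^ 2) in *.
  assert (Hprod : M ^ 4 <= r ^ 2 * m ^ 2).
  { replace (M ^ 4) with (M ^ 2 * M ^ 2) by ring.
    apply Rmult_le_compat; try (apply pow_le; lra); apply pow_incr; lra. }
  assert (0 <= X * (m - r) * (m + r)) by (apply Rmult_le_pos; [apply Rmult_le_pos|]; lra).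
  assert (X * (m - r) * (m + r) <= X * W * (4 * M)) by (apply Rmult_le_compat; nra).
  assert (Hpos : 0 < r ^ 2 * m ^ 2) by (apply Rmult_lt_0_compat; apply pow_lt; lra).
  assert (Hu : 0 <= u) by (apply Rmult_le_reg_r with (r ^ 2 * m ^ 2); lra).
  split; auto.
  apply Rle_div_iff; [apply pow_lt; lra|].
  assert (Hu4 : u * M ^ 4 <= X * W * (4 * M))
    by (apply Rle_trans with (u * (r ^ 2 * m ^ 2)); [apply Rmult_le_compat_l|]; lra).
  assert (Hid : X * W * (4 * M) * IZR Q ^ 2 = M ^ 4).
  { replace (X * W * (4 * M) * IZR Q ^ 2) with (M * (4 * X * W * IZR Q ^ 2)) by ring.
    rewrite EW. ring. }
  apply Rmult_le_reg_r with (M ^ 4); [apply pow_lt; lra|].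
  replace (u * IZR Q ^ 2 * M ^ 4) with (u * M ^ 4 * IZR Q ^ 2) by ring.
  apply Rle_trans with (X * W * (4 * M) * IZR Q ^ 2); [|lra].
  apply Rmult_le_compat_r; [apply pow_le; lra | exact Hu4].
Qed.

Lemma in_S_range (p : Z * Z) : in_S J X H p -> M < IZR (fst p) <= 2 * M.
Proof. intros [Hj _]. now apply HJM. Qed.

Definition approximates (b q a : Z) : Prop :=
  (1 <= q <= Q)%Z /\ (1 <= a)%Z /\ Z.gcd a q = 1%Z /\
  Rabs (IZR q * (X / block_start b ^ 2) - IZR a) <= K0 / IZR Q.

Lemma assignment_exists : exists assign : Z -> Z * Z, forall b,
  M <= block_start b <= 2 * M -> approximates b (fst (assign b)) (snd (assign b)).
Proof.
  apply (choice (fun b qa => M <= block_start b <= 2 * M -> approximates b (fst qa) (snd qa))).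
  intros b.
  destruct (classic (M <= block_start b <= 2 * M)) as [Hb|Hb]; [|exists (1, 1)%Z; tauto].
  assert (HQ : (1 <= Q)%Z) by (apply le_IZR, Q_ge1).
  destruct (positive_coprime_approximation (X / block_start b ^ 2) K0 Q HQ HK0)
    as [q [a Hqa]]; [|now exists (q, a)].
  assert (0 < block_start b ^ 2) by (apply pow_lt; lra).
  apply Rle_div_iff; [lra|].
  replace (1 / K0 * block_start b ^ 2) with (block_start b ^ 2 / K0) by (field; lra).
  apply Rdiv_le_iff; [lra|]. nra.
Qed.

Section Assigned.

Variable assign : Z -> Z * Z.
Hypothesis assign_spec : forall b,
  M <= block_start b <= 2 * M -> approximates b (fst (assign b)) (snd (assign b)).

Lemma assign_approximates_point (m q a : Z) : M < IZR m <= 2 * M -> assign (block m) = (q, a) ->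
  (1 <= q <= Q)%Z /\ (1 <= a)%Z /\ Z.gcd a q = 1%Z /\
  Rabs (IZR q * (X / IZR m ^ 2) - IZR a) <= (K0 + 1) / IZR Q.
Proof.
  intros [H1 H2] Hqa. destruct (block_start_spec m H1) as [[B1 B2] B3].
  destruct (assign_spec (block m)) as [Hq [Ha [Hg Hd]]]; [lra|]. rewrite Hqa in *. cbn [fst snd] in *.
  repeat split; auto; try lia.
  destruct (block_variation (block_start (block m)) (IZR m)) as [S1 S2]; auto; try lra.
  pose proof Q_ge1.
  assert (Hqr : 1 <= IZR q <= IZR Q) by (split; apply IZR_le; lia).
  assert (IZR q * (1 / IZR Q ^ 2) <= 1 / IZR Q).
  { replace (IZR q * (1 / IZR Q ^ 2)) with (IZR q / IZR Q * (1 / IZR Q)) by (field; lra).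
    assert (IZR q / IZR Q <= 1) by (apply Rdiv_le_iff; lra).
    assert (0 <= 1 / IZR Q) by (apply Rle_div_iff; lra). nra. }
  apply Rabs_le_iff in Hd. apply Rabs_le.
  assert (0 <= IZR q * (X / block_start (block m) ^ 2 - X / IZR m ^ 2) <= 1 / IZR Q)
    by (split; [apply Rmult_le_pos|apply Rle_trans with (IZR q * (1 / IZR Q ^ 2)); [apply Rmult_le_compat_l|]]; lra).
  replace ((K0 + 1) / IZR Q) with (K0 / IZR Q + 1 / IZR Q) by (field; lra).
  lra.
Qed.

Lemma assign_admissible (m q a : Z) : M < IZR m <= 2 * M -> assign (block m) = (q, a) ->
  admissible (c_low K0) (c_high K0) X M Q q a.
Proof.
  intros Hm Hqa. destruct (assign_approximates_point m q a Hm Hqa) as [Hq [Ha [Hg Hd]]].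
  split; [auto|]. split; [|auto].
  pose proof Q_ge1.
  assert (Hqr : 1 <= IZR q) by (apply IZR_le; lia).
  assert (Har : 1 <= IZR a) by (apply IZR_le; lia).
  assert (HE : (K0 + 1) / IZR Q <= K0 + 1) by (apply Rdiv_le_iff; nra).
  apply Rabs_le_iff in Hd.
  set (m' := IZR m) in *.
  assert (Hm2 : 0 < m' ^ 2) by (apply pow_lt; lra).
  assert (HM2 : 0 < M ^ 2) by (apply pow_lt; lra).
  set (u := X / m' ^ 2) in *. set (v := X / M ^ 2).
  assert (Hu : u * m' ^ 2 = X) by (unfold u; field; lra).
  assert (Hv : v * M ^ 2 = X) by (unfold v; field; lra).
  assert (Hu0 : 0 < u) by (apply Rdiv_lt_0_compat; lra).
  assert (HmM : M ^ 2 <= m' ^ 2 <= 4 * M ^ 2) by (split; nra).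
  assert (Huv : v <= 4 * u).
  { apply Rmult_le_reg_r with (M ^ 2); [lra|].
    assert (u * m' ^ 2 <= u * (4 * M ^ 2)) by (apply Rmult_le_compat_l; lra). lra. }
  assert (Hvu : u <= v).
  { apply Rmult_le_reg_r with (M ^ 2); [lra|].
    assert (u * M ^ 2 <= u * m' ^ 2) by (apply Rmult_le_compat_l; lra). lra. }
  assert (Hv4 : 4 <= K0 * v).
  { apply Rmult_le_reg_r with (M ^ 2); [lra|].
    replace (K0 * v * M ^ 2) with (K0 * (v * M ^ 2)) by ring. rewrite Hv. lra. }
  unfold c_low, c_high. split.
  - replace (1 / (4 * (K0 + 2)) * X / M ^ 2 * IZR q) with (IZR q * v / (4 * (K0 + 2)))
      by (unfold v; field; lra).
    apply Rdiv_le_iff; nra.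
  - replace ((1 + K0 * (K0 + 1)) * X / M ^ 2 * IZR q) with ((1 + K0 * (K0 + 1)) * (IZR q * v))
      by (unfold v; field; lra).
    assert (1 <= K0 * (IZR q * v)) by nra.
    assert (K0 + 1 <= K0 * (K0 + 1) * (IZR q * v)) by nra.
    assert (IZR q * u <= IZR q * v) by (apply Rmult_le_compat_l; lra).
    nra.
Qed.

(** A cell fixes the block of [m], the line [a m + q n = t], the window of width [q L]
    containing [m], and the side of the vertex of the parabola
    [m |-> m n = (t m - a m ^ 2) / q] on which [m] lies. *)

Definition cell : Type := (Z * Z * Z * bool)%type.

Definition window_width (q : Z) : Z := (q * Z.of_nat L)%Z.

Definition cell_of (q a : Z) (p : Z * Z) : cell :=
  (block (fst p), (a * fst p + q * snd p)%Z, (fst p / window_width q)%Z,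
   Z.leb (2 * a * fst p) (a * fst p + q * snd p)).

Definition in_cell (q a : Z) (i : cell) (p : Z * Z) : Prop :=
  in_S J X H p /\ assign (block (fst p)) = (q, a) /\ cell_of q a p = i.

Lemma window_width_pos (q : Z) : (1 <= q)%Z -> (0 < window_width q)%Z.
Proof. intros Hq. pose proof L_ge1. unfold window_width. nia. Qed.

Lemma cell_of_eq (q a : Z) (p p' : Z * Z) : cell_of q a p = cell_of q a p' ->
  block (fst p) = block (fst p') /\ (a * fst p + q * snd p = a * fst p' + q * snd p')%Z /\
  (fst p / window_width q = fst p' / window_width q)%Z /\
  Z.leb (2 * a * fst p) (a * fst p + q * snd p) = Z.leb (2 * a * fst p') (a * fst p' + q * snd p').
Proof.
  intros E. split; [exact (f_equal (fun c : cell => fst (fst (fst c))) E)|].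
  split; [exact (f_equal (fun c : cell => snd (fst (fst c))) E)|].
  split; [exact (f_equal (fun c : cell => snd (fst c)) E)|].
  exact (f_equal (fun c : cell => snd c) E).
Qed.

Lemma in_cell_convex (q a : Z) (i : cell) (p1 p p2 : Z * Z) :
  in_cell q a i p1 -> in_cell q a i p2 ->
  (a * fst p + q * snd p = a * fst p1 + q * snd p1)%Z -> (fst p1 <= fst p <= fst p2)%Z ->
  in_cell q a i p.
Proof.
  destruct p1 as [m1 n1], p as [m n], p2 as [m2 n2]; cbn [fst snd].
  intros [HS1 [Ha1 Hc1]] [HS2 [Ha2 Hc2]] Hline Hm.
  destruct (assign_approximates_point m1 q a (in_S_range _ HS1) Ha1) as [Hq [Ha _]].
  pose proof (window_width_pos q ltac:(lia)) as Hw.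
  rewrite <- Hc2 in Hc1.
  destruct (cell_of_eq _ _ _ _ Hc1) as [Hb12 [Ht12 [Hk12 Hs12]]]; cbn [fst snd] in *.
  rewrite <- Ht12 in Hs12.
  assert (Hb : block m = block m1)
    by (pose proof (block_mono m1 m); pose proof (block_mono m m2); lia).
  assert (Hk : (m / window_width q = m1 / window_width q)%Z).
  { pose proof (Z.div_le_mono m1 m _ Hw ltac:(lia)).
    pose proof (Z.div_le_mono m m2 _ Hw ltac:(lia)). lia. }
  assert (Hside : ((2 * a * m2 <= a * m1 + q * n1 /\ Z.leb (2 * a * m) (a * m1 + q * n1) = true
                   /\ Z.leb (2 * a * m1) (a * m1 + q * n1) = true) \/
                  (a * m1 + q * n1 < 2 * a * m1 /\ Z.leb (2 * a * m) (a * m1 + q * n1) = false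
                   /\ Z.leb (2 * a * m1) (a * m1 + q * n1) = false))%Z).
  { revert Hs12. destruct (Z.leb_spec (2 * a * m1) (a * m1 + q * n1));
      destruct (Z.leb_spec (2 * a * m2) (a * m1 + q * n1)); try discriminate; intros _.
    - left. split; [lia|]. split; [apply Z.leb_le; nia | reflexivity].
    - right. split; [lia|]. split; [apply Z.leb_gt; nia | reflexivity]. }
  destruct HS1 as [HJ1 HP1], HS2 as [HJ2 HP2]. cbn [fst snd] in HJ1, HP1, HJ2, HP2.
  destruct (line_products_monotone q a (a * m1 + q * n1) m1 n1 m n m2 n2) as [Hinc Hdec];
    auto; try lia.
  assert (HP : X < IZR (m * n) <= X + H).
  { destruct Hside as [[Ht _]|[Ht _]]; [destruct (Hinc Ht) as [P1 P2] | destruct (Hdec Ht) as [P1 P2]];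
      apply IZR_le in P1, P2; lra. }
  assert (Hmr : IZR m1 <= IZR m <= IZR m2) by (split; apply IZR_le; lia).
  split; [split; [apply (HJ (IZR m1) (IZR m) (IZR m2)); auto | exact HP]|].
  cbn [fst snd]. split; [rewrite Hb; exact Ha1|].
  rewrite <- Hc2, <- Hc1. unfold cell_of. cbn [fst snd].
  rewrite Hb, Hline, Hk. f_equal.
  destruct Hside as [[_ [-> ->]]|[_ [-> ->]]]; reflexivity.
Qed.

Lemma cell_is_AP (q a : Z) (i : cell) : (exists p, in_cell q a i p) ->
  exists x0 l, (1 <= l <= L)%nat /\ forall p, in_cell q a i p <-> in_AP x0 (q, - a)%Z l p.
Proof.
  intros [p0 Hp0]. pose proof Hp0 as [HS0 [Ha0 Hc0]].
  destruct (assign_approximates_point (fst p0) q a (in_S_range _ HS0) Ha0) as [Hq [Ha [Hg _]]].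
  pose proof (window_width_pos q ltac:(lia)) as Hw.
  apply (line_segment_is_AP q a L (in_cell q a i) p0); auto; [lia | now rewrite Z.gcd_comm | | |].
  - intros p [_ [_ Hc]]. rewrite <- Hc0 in Hc.
    now destruct (cell_of_eq _ _ _ _ Hc) as [_ [Ht _]].
  - intros p p' [_ [_ Hc]] [_ [_ Hc']]. rewrite <- Hc' in Hc.
    destruct (cell_of_eq _ _ _ _ Hc) as [_ [_ [Hk _]]]. now apply Zdiv_eq_close in Hk.
  - intros j1 j2 j H1 H2 Hj.
    apply (in_cell_convex q a i _ _ _ H1 H2); cbn [fst snd]; [ring | nia].
Qed.

Definition grid : list (Z * Z) :=
  list_prod (Zrange 1 (Z.to_nat (Int_part (2 * M)))) (Zrange 1 (Z.to_nat (Int_part (X + H)))).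

Lemma in_S_in_grid (p : Z * Z) : in_S J X H p -> In p grid.
Proof.
  intros HS. pose proof (in_S_range p HS) as [R1 R2]. destruct p as [m n].
  destruct HS as [_ [P1 P2]]. cbn [fst snd] in *.
  assert (Hm1 : (1 <= m)%Z) by (apply le_IZR; lra).
  assert (Hmn : (0 < m * n)%Z) by (apply lt_IZR; lra).
  assert (Hm : (m <= Int_part (2 * M))%Z) by (apply le_Int_part_iff; lra).
  assert (Hn : (n <= Int_part (X + H))%Z).
  { apply le_Int_part_iff. assert (Hnmn : (n <= m * n)%Z) by nia. apply IZR_le in Hnmn. lra. }
  apply in_prod; apply in_Zrange; nia.
Qed.

Definition cell_eq_dec : forall x y : cell, {x = y} + {x <> y}.
Proof. repeat decide equality; apply Z.eq_dec. Defined.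

Definition cells (q a : Z) : list cell :=
  nodup cell_eq_dec
    (map (cell_of q a)
       (filter (fun p => decide (in_S J X H p /\ assign (block (fst p)) = (q, a))) grid)).

Lemma in_cells (q a : Z) (i : cell) : In i (cells q a) <-> exists p, in_cell q a i p.
Proof.
  unfold cells. rewrite nodup_In, in_map_iff. split.
  - intros [p [Hi Hp]]. apply filter_In in Hp as [_ Hd]. apply decide_spec in Hd as [HS Ha].
    now exists p.
  - intros [p [HS [Ha Hi]]]. exists p. split; auto. apply filter_In.
    split; [now apply in_S_in_grid | now apply decide_spec].
Qed.

Section Count.

Variables q a : Z.
Hypothesis Hadm : admissible (c_low K0) (c_high K0) X M Q q a.

Let Kq := IZR q * X.
Let eps := IZR q * H / M.
Let E0 := (K0 + 1) / IZR Q.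
Let D := 16 * E0 * M ^ 3 / Kq.
Let w := IZR (window_width q).
Let beta := M ^ 3 / (X * IZR Q ^ 2 * IZR q).

Lemma q_bounds : 1 <= IZR q <= IZR Q.
Proof. destruct Hadm as [Hq _]. split; apply IZR_le; lia. Qed.

Lemma a_lower : c_low K0 * X / M ^ 2 * IZR q <= IZR a.
Proof. now destruct Hadm as [_ [[Ha _] _]]. Qed.

Lemma a_ge1 : 1 <= IZR a.
Proof.
  pose proof a_lower. pose proof q_bounds. pose proof (c_low_high_bounds K0 HK0).
  assert (0 < c_low K0 * X / M ^ 2 * IZR q).
  { apply Rmult_lt_0_compat; [|lra]. apply Rdiv_lt_0_compat; [nra|apply pow_lt; lra]. }
  assert (Hpos : 0 < IZR a) by lra. apply lt_IZR in Hpos. apply IZR_le. lia.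
Qed.

Lemma w_eq : w = IZR q * INR L.
Proof. unfold w, window_width. now rewrite mult_IZR, <- INR_IZR_INZ. Qed.

Lemma w_pos : 0 < w.
Proof. apply IZR_lt, window_width_pos. destruct Hadm as [Hq _]. lia. Qed.

Lemma w_bounds : IZR q * H * IZR Q / (2 * M) <= w <= IZR q * H * IZR Q / M.
Proof.
  rewrite w_eq. pose proof L_ge. pose proof L_le. pose proof q_bounds.
  replace (IZR q * H * IZR Q / (2 * M)) with (IZR q * (H * IZR Q / (2 * M))) by (field; lra).
  replace (IZR q * H * IZR Q / M) with (IZR q * (H * IZR Q / M)) by (field; lra).
  split; apply Rmult_le_compat_l; lra.
Qed.

Lemma eps_pos : 0 < eps.
Proof. pose proof q_bounds. apply Rdiv_lt_0_compat; nra. Qed.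

Lemma E0_pos : 0 < E0.
Proof. pose proof Q_ge1. apply Rdiv_lt_0_compat; lra. Qed.

Lemma Kq_pos : 0 < Kq.
Proof. pose proof q_bounds. unfold Kq. nra. Qed.

Lemma D_pos : 0 < D.
Proof.
  pose proof E0_pos. pose proof Kq_pos.
  apply Rdiv_lt_0_compat; auto. apply Rmult_lt_0_compat; [lra|apply pow_lt; lra].
Qed.

Lemma beta_ge1 : 1 <= beta.
Proof.
  pose proof q_bounds. pose proof Q_ge1. pose proof XQ3_le_M3.
  apply Rle_div_iff; [apply Rmult_lt_0_compat; [apply Rmult_lt_0_compat; [|apply pow_lt]|]; lra|].
  assert (X * IZR Q ^ 2 * IZR q <= X * IZR Q ^ 2 * IZR Q)
    by (apply Rmult_le_compat_l; [apply Rmult_le_pos; [|apply pow_le]|]; lra).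
  replace (X * IZR Q ^ 3) with (X * IZR Q ^ 2 * IZR Q) in * by ring. lra.
Qed.

Lemma eps_le_beta : eps <= beta.
Proof.
  pose proof q_bounds. pose proof Q_ge1.
  apply Rdiv_le_iff; [lra|].
  replace (beta * M) with (M ^ 4 / (X * IZR Q ^ 2 * IZR q)) by (unfold beta; field; repeat split; lra).
  apply Rle_div_iff; [apply Rmult_lt_0_compat; [apply Rmult_lt_0_compat; [|apply pow_lt]|]; lra|].
  assert (IZR q ^ 2 <= IZR Q ^ 2) by (apply pow_incr; lra).
  assert (0 <= H * X * IZR Q ^ 2) by (apply Rmult_le_pos; [|apply pow_le]; nra).
  assert (IZR q ^ 2 * (H * X * IZR Q ^ 2) <= IZR Q ^ 2 * (H * X * IZR Q ^ 2))
    by (apply Rmult_le_compat_r; auto).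
  replace (IZR q * H * (X * IZR Q ^ 2 * IZR q)) with (IZR q ^ 2 * (H * X * IZR Q ^ 2)) by ring.
  replace (IZR Q ^ 2 * (H * X * IZR Q ^ 2)) with (IZR Q ^ 4 * (H * X)) in * by ring.
  lra.
Qed.

Lemma E0_D : E0 * D = 16 * (K0 + 1) ^ 2 * beta.
Proof. pose proof q_bounds. pose proof Q_ge1. unfold D, beta, Kq, E0. field. repeat split; lra. Qed.

Lemma eps_D_over_w : eps * (D / w) <= 32 * (K0 + 1) * beta.
Proof.
  pose proof w_pos. pose proof w_bounds. pose proof q_bounds. pose proof Q_ge1. pose proof beta_ge1.
  replace (eps * (D / w)) with (eps * D / w) by (field; lra).
  apply Rdiv_le_iff; auto.
  assert (E : eps * D = (32 * (K0 + 1) * beta) * (IZR q * H * IZR Q / (2 * M))).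
  { unfold eps, D, beta, Kq, E0. field. repeat split; lra. }
  rewrite E. apply Rmult_le_compat_l; [nra | lra].
Qed.

Lemma E0_w : E0 * w <= (K0 + 1) * eps.
Proof.
  pose proof w_bounds. pose proof q_bounds. pose proof Q_ge1. pose proof E0_pos.
  replace ((K0 + 1) * eps) with (E0 * (IZR q * H * IZR Q / M)) by (unfold E0, eps; field; lra).
  apply Rmult_le_compat_l; lra.
Qed.

Definition on_line (t m : Z) : Prop :=
  exists n, in_S J X H (m, n) /\ assign (block m) = (q, a) /\ (a * m + q * n = t)%Z.

Lemma on_line_range (t m : Z) : on_line t m -> M < IZR m <= 2 * M.
Proof. intros [n [HS _]]. exact (in_S_range _ HS). Qed.

(** On the line [a m + q n = t] we have [t = a m + q (m n) / m] with [X < m n <= X + H]. *)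

Lemma on_line_near (t m : Z) : on_line t m ->
  hyperbolic (IZR a) Kq (IZR m) < IZR t < hyperbolic (IZR a) Kq (IZR m) + eps.
Proof.
  intros Hon. pose proof (on_line_range t m Hon) as [R1 R2].
  destruct Hon as [n [[_ [P1 P2]] [_ Et]]]. cbn [fst snd] in P1, P2.
  rewrite mult_IZR in P1, P2. rewrite <- Et, plus_IZR, !mult_IZR.
  pose proof q_bounds. unfold hyperbolic, Kq, eps.
  assert (E : IZR a * IZR m + IZR q * IZR n - (IZR a * IZR m + IZR q * X / IZR m)
              = IZR q * (IZR m * IZR n - X) / IZR m) by (field; lra).
  assert (0 < IZR q * (IZR m * IZR n - X) / IZR m) by (apply Rdiv_lt_0_compat; nra).
  assert (IZR q * (IZR m * IZR n - X) / IZR m < IZR q * H / M).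
  { apply Rle_lt_trans with (IZR q * H / IZR m).
    - apply Rdiv_le_mono_r; nra.
    - unfold Rdiv. apply Rmult_lt_compat_l; [nra|]. apply Rinv_lt_contravar; nra. }
  lra.
Qed.

Lemma on_line_flat (t m : Z) : on_line t m -> Rabs (Kq / IZR m ^ 2 - IZR a) <= E0.
Proof.
  intros Hon. pose proof (on_line_range t m Hon) as Hm. destruct Hon as [n [_ [Ha _]]].
  destruct (assign_approximates_point m q a Hm Ha) as [_ [_ [_ Hr]]].
  replace (Kq / IZR m ^ 2) with (IZR q * (X / IZR m ^ 2)) by (unfold Kq; field; lra).
  exact Hr.
Qed.

Lemma on_line_diam (t t' m m' : Z) : on_line t m -> on_line t' m' -> IZR m - IZR m' <= D.
Proof.
  intros H1 H2. pose proof D_pos.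
  destruct (Rle_lt_dec (IZR m) (IZR m')); [lra|].
  pose proof (on_line_range _ _ H1). pose proof (on_line_range _ _ H2). pose proof Kq_pos.
  apply (hyperbolic_flat_region_width (IZR a) Kq E0 M (IZR m') (IZR m)); try lra.
  - exact (on_line_flat t' m' H2).
  - exact (on_line_flat t m H1).
Qed.

Lemma on_line_lipschitz (t t' m m' : Z) : on_line t m -> on_line t' m' ->
  Rabs (hyperbolic (IZR a) Kq (IZR m) - hyperbolic (IZR a) Kq (IZR m')) <= E0 * Rabs (IZR m - IZR m').
Proof.
  intros H1 H2. pose proof (on_line_range _ _ H1). pose proof (on_line_range _ _ H2).
  pose proof Kq_pos. pose proof (on_line_flat _ _ H1). pose proof (on_line_flat _ _ H2).
  destruct (Rle_lt_dec (IZR m) (IZR m')).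
  - rewrite Rabs_minus_sym, (Rabs_minus_sym (IZR m)), (Rabs_right (IZR m' - IZR m)) by lra.
    apply hyperbolic_lipschitz; auto; lra.
  - rewrite (Rabs_right (IZR m - IZR m')) by lra.
    apply hyperbolic_lipschitz; auto; lra.
Qed.

Lemma on_line_lines_close (t t' m m' : Z) : on_line t m -> on_line t' m' ->
  IZR t - IZR t' < eps + E0 * D.
Proof.
  intros H1 H2. pose proof (on_line_near _ _ H1). pose proof (on_line_near _ _ H2).
  pose proof (on_line_lipschitz _ _ _ _ H1 H2) as Hl.
  assert (Rabs (IZR m - IZR m') <= D)
    by (apply Rabs_le; pose proof (on_line_diam _ _ _ _ H1 H2); pose proof (on_line_diam _ _ _ _ H2 H1); lra).
  assert (E0 * Rabs (IZR m - IZR m') <= E0 * D) by (apply Rmult_le_compat_l; [pose proof E0_pos|]; lra).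
  apply Rabs_le_iff in Hl. lra.
Qed.

Lemma on_line_windows_close (t t' m m' : Z) : on_line t m -> on_line t' m' ->
  (m / window_width q = m' / window_width q)%Z -> IZR (Z.abs (t - t')) <= eps + E0 * w.
Proof.
  intros H1 H2 Hk. pose proof (on_line_near _ _ H1). pose proof (on_line_near _ _ H2).
  pose proof (on_line_lipschitz _ _ _ _ H1 H2) as Hl.
  destruct Hadm as [Hq _]. pose proof (window_width_pos q ltac:(lia)) as Hw.
  apply Zdiv_eq_close in Hk; [|exact Hw].
  assert (Rabs (IZR m - IZR m') <= w) by (rewrite <- minus_IZR, <- abs_IZR; apply IZR_le; lia).
  assert (E0 * Rabs (IZR m - IZR m') <= E0 * w) by (apply Rmult_le_compat_l; [pose proof E0_pos|]; lra).
  rewrite abs_IZR, minus_IZR. apply Rabs_le_iff in Hl. apply Rabs_le. lra.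
Qed.

Definition realized (x : Z * Z) : Prop :=
  exists m, on_line (fst x) m /\ (m / window_width q)%Z = snd x.

Lemma count_realized (TK : list (Z * Z)) : NoDup TK -> (forall x, In x TK -> realized x) ->
  INR (length TK) <= (2 * (D / w + 1) + 1) * (2 * (eps + E0 * w) + 1).
Proof.
  intros HTK Hr. pose proof w_pos. pose proof eps_pos. pose proof E0_pos. pose proof D_pos.
  assert (HE0w : 0 <= E0 * w) by nra.
  assert (HDw : 0 <= D / w) by (apply Rle_div_iff; lra).
  set (Ks := nodup Z.eq_dec (map snd TK)).
  rewrite (length_as_sum_of_fibers snd TK Ks (NoDup_nodup _ _))
    by (intros x Hx; apply nodup_In, in_map, Hx).
  apply Rle_trans with (INR (length Ks) * (2 * (eps + E0 * w) + 1)).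
  - apply sumR_map_le_const. intros k _. rewrite <- (length_map fst).
    apply NoDup_Z_spread_length; [lra | now apply NoDup_map_fst_fiber |].
    intros t1 t2 In1 In2.
    apply in_map_iff in In1 as [[t1' k1] [<- F1]], In2 as [[t2' k2] [<- F2]].
    apply filter_In in F1 as [I1 K1], F2 as [I2 K2]. apply Z.eqb_eq in K1, K2.
    destruct (Hr _ I1) as [m1 [P1 W1]], (Hr _ I2) as [m2 [P2 W2]]. cbn in *.
    apply (on_line_windows_close _ _ m1 m2); auto. congruence.
  - apply Rmult_le_compat_r; [lra|].
    apply NoDup_Z_spread_length; [lra | apply NoDup_nodup |].
    intros k1 k2 In1 In2.
    apply nodup_In, in_map_iff in In1 as [x1 [<- I1]], In2 as [x2 [<- I2]].
    destruct (Hr _ I1) as [m1 [P1 <-]], (Hr _ I2) as [m2 [P2 <-]].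
    destruct Hadm as [Hq _]. pose proof (window_width_pos q ltac:(lia)).
    pose proof (Zdiv_diff_lt m1 m2 (window_width q) ltac:(lia)).
    pose proof (Zdiv_diff_lt m2 m1 (window_width q) ltac:(lia)).
    pose proof (on_line_diam _ _ _ _ P1 P2). pose proof (on_line_diam _ _ _ _ P2 P1).
    assert ((IZR m2 - IZR m1) / w <= D / w) by (apply Rdiv_le_mono_r; lra).
    assert ((IZR m1 - IZR m2) / w <= D / w) by (apply Rdiv_le_mono_r; lra).
    rewrite abs_IZR, minus_IZR. apply Rabs_le. unfold w in *. lra.
Qed.

(** On the descending side we use the coordinate [u = - m], so that on both sides
    consecutive lines are met in increasing order of [u]. *)

Definition on_side (s : bool) (m : Z) : Prop :=
  if s then Kq <= IZR a * IZR m ^ 2 else IZR a * IZR m ^ 2 <= Kq.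

Definition signed (s : bool) (u : Z) : Z := if s then u else (- u)%Z.

Definition side_point (s : bool) (t u : Z) : Prop :=
  on_line t (signed s u) /\ on_side s (signed s u).

Definition realized_on_side (s : bool) (x : Z * Z) : Prop :=
  exists m, on_line (fst x) m /\ (m / window_width q)%Z = snd x /\ on_side s m.

Lemma ascending_chain (t' t p x y : Z) : eps < 1 -> (t' < t)%Z ->
  on_line t' p -> on_line t x -> on_line t y -> (x <= y)%Z -> on_side true x ->
  (1 - eps) * (IZR y - IZR x) <= eps * (IZR x - IZR p).
Proof.
  intros He Htt Hp Hx Hy Hxy Hside. cbn in Hside.
  pose proof (on_line_near _ _ Hp). pose proof (on_line_near _ _ Hx). pose proof (on_line_near _ _ Hy).
  pose proof (on_line_range _ _ Hp). pose proof (on_line_range _ _ Hx).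
  pose proof Kq_pos. pose proof eps_pos.
  assert (Htt' : IZR t' <= IZR t - 1) by (rewrite <- minus_IZR; apply IZR_le; lia).
  assert (Hxy' : IZR x <= IZR y) by (apply IZR_le; auto).
  assert (Hpx : IZR p < IZR x).
  { destruct (Rlt_le_dec (IZR p) (IZR x)) as [|Hxp]; auto.
    pose proof (hyperbolic_le_ascending (IZR a) Kq (IZR x) (IZR p)). lra. }
  (* The slope of g is at least (1 - eps) / (x - p) on [p, x] and at most eps / (y - x) on [x, y]. *)
  pose proof (hyperbolic_three_slope (IZR a) Kq (IZR p) (IZR x) (IZR y)) as Hslope.
  set (g := hyperbolic (IZR a) Kq) in *.
  assert ((1 - eps) * (IZR y - IZR x) <= (g (IZR x) - g (IZR p)) * (IZR y - IZR x))
    by (apply Rmult_le_compat_r; lra).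
  assert ((g (IZR y) - g (IZR x)) * (IZR x - IZR p) <= eps * (IZR x - IZR p))
    by (apply Rmult_le_compat_r; lra).
  specialize (Hslope ltac:(lra) ltac:(lra) ltac:(lra) ltac:(lra)). lra.
Qed.

Lemma descending_chain (t' t p x y : Z) : eps < 1 -> (t' < t)%Z ->
  on_line t' p -> on_line t x -> on_line t y -> (x <= y)%Z -> on_side false y ->
  (1 - eps) * (IZR y - IZR x) <= eps * (IZR p - IZR y).
Proof.
  intros He Htt Hp Hx Hy Hxy Hside. cbn in Hside.
  pose proof (on_line_near _ _ Hp). pose proof (on_line_near _ _ Hx). pose proof (on_line_near _ _ Hy).
  pose proof (on_line_range _ _ Hp). pose proof (on_line_range _ _ Hx).
  pose proof Kq_pos. pose proof eps_pos. pose proof a_ge1.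
  assert (Htt' : IZR t' <= IZR t - 1) by (rewrite <- minus_IZR; apply IZR_le; lia).
  assert (Hxy' : IZR x <= IZR y) by (apply IZR_le; auto).
  assert (Hyp : IZR y < IZR p).
  { destruct (Rlt_le_dec (IZR y) (IZR p)) as [|Hpy]; auto.
    pose proof (hyperbolic_le_descending (IZR a) Kq (IZR p) (IZR y)). lra. }
  pose proof (hyperbolic_three_slope (IZR a) Kq (IZR x) (IZR y) (IZR p)) as Hslope.
  set (g := hyperbolic (IZR a) Kq) in *.
  assert ((g (IZR p) - g (IZR y)) * (IZR y - IZR x) <= - (1 - eps) * (IZR y - IZR x))
    by (apply Rmult_le_compat_r; lra).
  assert (- eps * (IZR p - IZR y) <= (g (IZR y) - g (IZR x)) * (IZR p - IZR y))
    by (apply Rmult_le_compat_r; lra).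
  specialize (Hslope ltac:(lra) ltac:(lra) ltac:(lra) ltac:(lra)). lra.
Qed.

Lemma ascending_span (t x y : Z) : on_line t x -> on_line t y -> (x <= y)%Z -> on_side true x ->
  IZR a * (IZR y - IZR x) ^ 2 <= 2 * M * eps.
Proof.
  intros Hx Hy Hxy Hside. cbn in Hside.
  pose proof (on_line_near _ _ Hx). pose proof (on_line_near _ _ Hy).
  pose proof (on_line_range _ _ Hx). pose proof (on_line_range _ _ Hy). pose proof eps_pos.
  assert (Hxy' : IZR x <= IZR y) by (apply IZR_le; auto).
  pose proof (hyperbolic_tangent_ascending (IZR a) Kq (IZR x) (IZR y) ltac:(lra) Hxy' Hside).
  pose proof (hyperbolic_le_ascending (IZR a) Kq (IZR x) (IZR y) ltac:(lra) Hxy' ltac:(pose proof Kq_pos; lra) Hside).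
  set (g := hyperbolic (IZR a) Kq) in *.
  assert (IZR y * (g (IZR y) - g (IZR x)) <= (2 * M) * eps) by (apply Rmult_le_compat; lra).
  lra.
Qed.

Lemma descending_span (t x y : Z) : on_line t x -> on_line t y -> (x <= y)%Z -> on_side false y ->
  IZR a * (IZR y - IZR x) ^ 2 <= 2 * M * eps.
Proof.
  intros Hx Hy Hxy Hside. cbn in Hside.
  pose proof (on_line_near _ _ Hx). pose proof (on_line_near _ _ Hy).
  pose proof (on_line_range _ _ Hx). pose proof (on_line_range _ _ Hy). pose proof eps_pos.
  pose proof a_ge1.
  assert (Hxy' : IZR x <= IZR y) by (apply IZR_le; auto).
  pose proof (hyperbolic_tangent_descending (IZR a) Kq (IZR x) (IZR y) ltac:(lra) Hxy' Hside).
  pose proof (hyperbolic_le_descending (IZR a) Kq (IZR x) (IZR y) ltac:(lra) Hxy' ltac:(lra) Hside).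
  set (g := hyperbolic (IZR a) Kq) in *.
  assert (IZR x * (g (IZR x) - g (IZR y)) <= (2 * M) * eps) by (apply Rmult_le_compat; lra).
  lra.
Qed.

Let S := 8 / c_low K0 * beta * w.

Lemma S_over_w : S / w = 32 * (K0 + 2) * beta.
Proof. pose proof w_pos. unfold S, c_low. field. split; lra. Qed.

Lemma S_nonneg : 0 <= S.
Proof.
  pose proof w_pos. pose proof beta_ge1.
  assert (Hs : 0 <= S / w) by (rewrite S_over_w; nra).
  apply Rle_div_iff in Hs; lra.
Qed.

Lemma span_sq_le : 2 * M * eps / IZR a <= S ^ 2.
Proof.
  pose proof (c_low_high_bounds K0 HK0) as [[Hc Hc1] _].
  pose proof a_lower. pose proof a_ge1. pose proof q_bounds. pose proof Q_ge1.
  pose proof XQ2_le_HM2. pose proof w_bounds. pose proof w_pos. pose proof beta_ge1.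
  set (c := c_low K0) in *.
  assert (S1 : 2 * M * eps / IZR a <= 2 * H * M ^ 2 / (c * X)).
  { apply Rdiv_le_iff; [lra|].
    apply Rle_trans with (2 * H * M ^ 2 / (c * X) * (c * X / M ^ 2 * IZR q)).
    - replace (2 * H * M ^ 2 / (c * X) * (c * X / M ^ 2 * IZR q)) with (2 * H * IZR q)
        by (field; repeat split; lra).
      unfold eps. replace (2 * M * (IZR q * H / M)) with (2 * H * IZR q) by (field; lra). lra.
    - apply Rmult_le_compat_l; [|lra].
      apply Rle_div_iff; [nra|]. rewrite Rmult_0_l. apply Rmult_le_pos; [|apply pow_le]; lra. }
  assert (S2 : 2 * H * M ^ 2 / (c * X) <= S ^ 2).
  { assert (Hw2 : (IZR q * H * IZR Q / (2 * M)) ^ 2 <= w ^ 2).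
    { apply pow_incr. split; [|lra]. apply Rle_div_iff; [lra|]. rewrite Rmult_0_l.
      apply Rmult_le_pos; [apply Rmult_le_pos|]; lra. }
    assert (E : (8 / c * beta * (IZR q * H * IZR Q / (2 * M))) ^ 2
                = 16 * H ^ 2 * M ^ 4 / (c ^ 2 * X ^ 2 * IZR Q ^ 2))
      by (unfold beta; field; repeat split; lra).
    assert (Hmono : (8 / c * beta * (IZR q * H * IZR Q / (2 * M))) ^ 2 <= S ^ 2).
    { unfold S. rewrite !Rpow_mult_distr.
      apply Rmult_le_compat_l; [apply Rmult_le_pos; apply pow2_ge_0 | exact Hw2]. }
    assert (Hratio : 2 * H * M ^ 2 / (c * X) <= 16 * H ^ 2 * M ^ 4 / (c ^ 2 * X ^ 2 * IZR Q ^ 2)).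
    { apply Rdiv_le_iff; [nra|].
      replace (16 * H ^ 2 * M ^ 4 / (c ^ 2 * X ^ 2 * IZR Q ^ 2) * (c * X))
        with ((2 * H * M ^ 2) * (8 * H * M ^ 2 / (c * (X * IZR Q ^ 2)))) by (field; repeat split; lra).
      assert (HXQ : 0 < X * IZR Q ^ 2) by (apply Rmult_lt_0_compat; [|apply pow_lt]; lra).
      assert (1 <= 8 * H * M ^ 2 / (c * (X * IZR Q ^ 2))) by (apply Rle_div_iff; nra).
      assert (0 < 2 * H * M ^ 2) by (apply Rmult_lt_0_compat; [|apply pow_lt]; lra).
      nra. }
    lra. }
  lra.
Qed.

Lemma side_chain (s : bool) (t' t p x y : Z) : eps < 1 / 2 ->
  side_point s t' p -> side_point s t x -> side_point s t y -> (t' < t)%Z -> (x <= y)%Z ->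
  IZR y - IZR x <= eps / (1 - eps) * (IZR x - IZR p).
Proof.
  intros He [Pp _] [Px Sx] [Py Sy] Htt Hxy.
  replace (eps / (1 - eps) * (IZR x - IZR p)) with (eps * (IZR x - IZR p) / (1 - eps)) by (field; lra).
  apply Rle_div_iff; [lra|]. rewrite Rmult_comm.
  destruct s; cbn [signed] in *.
  - apply (ascending_chain t' t); auto. lra.
  - pose proof (descending_chain t' t (- p) (- y) (- x)) as Hc.
    rewrite !opp_IZR in Hc. replace (IZR y - IZR x) with (- IZR x - - IZR y) by ring.
    replace (IZR x - IZR p) with (- IZR p - - IZR x) by ring. apply Hc; auto; lra || lia.
Qed.

Lemma side_span (s : bool) (t x y : Z) :
  side_point s t x -> side_point s t y -> (x <= y)%Z -> IZR y - IZR x <= S.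
Proof.
  intros [Px Sx] [Py Sy] Hxy. pose proof a_ge1. pose proof S_nonneg. pose proof span_sq_le.
  assert (Hsq : IZR a * (IZR y - IZR x) ^ 2 <= 2 * M * eps).
  { destruct s; cbn [signed] in *.
    - now apply (ascending_span t).
    - replace (IZR y - IZR x) with (IZR (- x) - IZR (- y)) by (rewrite !opp_IZR; ring).
      apply (descending_span t); auto. lia. }
  assert (Hxy' : IZR x <= IZR y) by (apply IZR_le; auto).
  apply (pow_le_reg 2); [lia|lra|lra|].
  apply Rle_trans with (2 * M * eps / IZR a); auto.
  apply Rle_div_iff; lra.
Qed.

Lemma side_diam (s : bool) (t t' x y : Z) : side_point s t x -> side_point s t' y -> IZR x - IZR y <= D.
Proof.
  intros [Px _] [Py _]. destruct s; cbn [signed] in *.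
  - exact (on_line_diam _ _ _ _ Px Py).
  - pose proof (on_line_diam _ _ _ _ Py Px). rewrite !opp_IZR in *. lra.
Qed.

Lemma side_point_bounds (s : bool) (t u : Z) : side_point s t u ->
  (- Int_part (2 * M) <= u <= Int_part (2 * M))%Z.
Proof.
  intros [Pu _]. pose proof (on_line_range _ _ Pu) as [R1 R2].
  assert (Hm : (1 <= signed s u <= Int_part (2 * M))%Z).
  { split; [apply le_IZR; lra | apply le_Int_part_iff; lra]. }
  destruct s; cbn [signed] in Hm; lia.
Qed.

Lemma side_point_signed (s : bool) (t m : Z) :
  on_line t m -> on_side s m -> side_point s t (signed s m).
Proof.
  intros Pm Sm. unfold side_point. destruct s; cbn [signed]; rewrite ?Z.opp_involutive; auto.
Qed.

Lemma side_fiber_empty (s : bool) (TK : list (Z * Z)) (t : Z) :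
  (forall z, In z TK -> realized_on_side s z) -> ~ (exists u, side_point s t u) ->
  filter (fun z => Z.eqb (fst z) t) TK = [].
Proof.
  intros Hr Hnone. destruct (filter _ TK) as [|z l] eqn:Ef; [reflexivity|]. exfalso.
  assert (Hz : In z (filter (fun z => Z.eqb (fst z) t) TK)) by (rewrite Ef; now left).
  apply filter_In in Hz as [Hz Ht]. apply Z.eqb_eq in Ht.
  destruct (Hr z Hz) as [m [Pm [_ Sm]]]. rewrite Ht in Pm.
  apply Hnone. exists (signed s m). now apply side_point_signed.
Qed.

Lemma side_fiber_count (s : bool) (TK : list (Z * Z)) (t x y : Z) : NoDup TK ->
  (forall z, In z TK -> realized_on_side s z) ->
  side_point s t x -> side_point s t y -> (forall u, side_point s t u -> (x <= u <= y)%Z) ->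
  INR (length (filter (fun z => Z.eqb (fst z) t) TK)) <= (IZR y - IZR x) / w + 2.
Proof.
  intros HTK Hr Px Py Hext.
  assert (Hxy : (x <= y)%Z) by (apply Hext; auto).
  destruct Hadm as [Hq _]. pose proof (window_width_pos q ltac:(lia)) as Hw.
  rewrite <- (length_map snd).
  set (lo := if s then x else (- y)%Z). set (hi := if s then y else (- x)%Z).
  replace (IZR y - IZR x) with (IZR hi - IZR lo)
    by (unfold lo, hi; destruct s; rewrite ?opp_IZR; ring).
  apply NoDup_quotients_length; [auto | unfold lo, hi; destruct s; lia
                                 | now apply NoDup_map_snd_fiber |].
  intros k Hk. apply in_map_iff in Hk as [z [<- Hz]].
  apply filter_In in Hz as [Hz Ht]. apply Z.eqb_eq in Ht.
  destruct (Hr z Hz) as [m [Pm [Wm Sm]]]. exists m. split; [|auto].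
  rewrite Ht in Pm. specialize (Hext _ (side_point_signed s t m Pm Sm)).
  unfold lo, hi. destruct s; cbn [signed] in Hext; lia.
Qed.

Lemma count_side (s : bool) (TK : list (Z * Z)) : eps < 1 / 2 -> NoDup TK ->
  (forall z, In z TK -> realized_on_side s z) ->
  INR (length TK) <= 2 * (2 * (eps + E0 * D) + 3) + (S + eps / (1 - eps) * D) / w.
Proof.
  intros He HTK Hr.
  pose proof w_pos. pose proof eps_pos. pose proof D_pos. pose proof S_nonneg. pose proof E0_pos.
  assert (Hc : 0 <= eps / (1 - eps)) by (apply Rle_div_iff; lra).
  assert (HED : 0 <= E0 * D) by nra.
  destruct TK as [|z0 TK'] eqn:ETK.
  { simpl. assert (0 <= (S + eps / (1 - eps) * D) / w) by (apply Rle_div_iff; nra). lra. }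
  rewrite <- ETK in *.
  destruct (Hr z0 ltac:(rewrite ETK; now left)) as [m0 [P0 _]].
  set (N := (Int_part (eps + E0 * D) + 1)%Z).
  pose proof (Int_part_bounds (eps + E0 * D)) as HIP.
  assert (HN : (0 <= Int_part (eps + E0 * D))%Z) by (apply le_Int_part_iff; lra).
  rewrite (length_as_sum_of_fibers fst TK (Zrange (fst z0 - N) (Z.to_nat (2 * N + 1)))
             (NoDup_Zrange _ _)).
  2: { intros z Hz. destruct (Hr z Hz) as [m [Pm _]]. apply in_Zrange.
       pose proof (on_line_lines_close _ _ _ _ P0 Pm). pose proof (on_line_lines_close _ _ _ _ Pm P0).
       assert (Hlt1 : IZR (fst z - fst z0) < IZR N) by (unfold N; rewrite minus_IZR, plus_IZR; lra).
       assert (Hlt2 : IZR (fst z0 - fst z) < IZR N) by (unfold N; rewrite minus_IZR, plus_IZR; lra).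
       apply lt_IZR in Hlt1, Hlt2. lia. }
  eapply Rle_trans.
  { apply (sum_counts_chain_le (side_point s)
             (fun k => INR (length (filter (fun z => Z.eqb (fst z) k) TK))) w S (eps / (1 - eps)) D);
      auto; try lra.
    - intros t Hnone. now rewrite (side_fiber_empty s TK t Hr Hnone).
    - intros t Hex.
      destruct (Z_bounded_extremes (side_point s t) _ _ Hex (side_point_bounds s t))
        as [x [y [Px [Py Hext]]]].
      exists x, y. do 2 (split; [auto|]). split; [now apply Hext|].
      now apply (side_fiber_count s TK t x y).
    - intros t' t p x y Pp Px Py Htt Hxy. now apply (side_chain s t' t p x y).
    - intros t x y Px Py Hxy. now apply (side_span s t).
    - intros t t' x y Px Py. now apply (side_diam s t t'). }
  rewrite INR_IZR_INZ, Z2Nat.id by lia. rewrite plus_IZR, mult_IZR.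
  unfold N in *. rewrite plus_IZR in *. lra.
Qed.

Lemma side_count_bound : eps < 1 / 2 ->
  2 * (2 * (eps + E0 * D) + 3) + (S + eps / (1 - eps) * D) / w <= 200 * (K0 + 2) ^ 2 * beta.
Proof.
  intros He. pose proof w_pos. pose proof eps_pos. pose proof D_pos. pose proof beta_ge1.
  pose proof eps_le_beta. pose proof E0_D. pose proof S_over_w. pose proof eps_D_over_w.
  assert (HDw : 0 <= D / w) by (apply Rle_div_iff; lra).
  assert (Hc : eps / (1 - eps) <= 2 * eps) by (apply Rdiv_le_iff; nra).
  assert (E : (S + eps / (1 - eps) * D) / w = S / w + eps / (1 - eps) * (D / w)) by (field; lra).
  assert (eps / (1 - eps) * (D / w) <= 2 * eps * (D / w)) by (apply Rmult_le_compat_r; auto).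
  assert (Hpoly : 10 + 64 * (K0 + 1) ^ 2 + 32 * (K0 + 2) + 64 * (K0 + 1) <= 200 * (K0 + 2) ^ 2)
    by nra.
  assert ((10 + 64 * (K0 + 1) ^ 2 + 32 * (K0 + 2) + 64 * (K0 + 1)) * beta
          <= 200 * (K0 + 2) ^ 2 * beta) by (apply Rmult_le_compat_r; lra).
  nra.
Qed.

Lemma spread_count_bound : 1 / 2 <= eps ->
  (2 * (D / w + 1) + 1) * (2 * (eps + E0 * w) + 1) <= 200 * (K0 + 2) ^ 2 * beta.
Proof.
  intros He. pose proof w_pos. pose proof D_pos. pose proof beta_ge1. pose proof E0_pos.
  pose proof eps_le_beta. pose proof eps_D_over_w. pose proof E0_w.
  assert (HDw : 0 <= D / w) by (apply Rle_div_iff; lra).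
  assert (B1 : 2 * (eps + E0 * w) + 1 <= (2 * K0 + 6) * eps) by nra.
  apply Rle_trans with ((2 * (D / w) + 3) * ((2 * K0 + 6) * eps)).
  { replace (2 * (D / w + 1) + 1) with (2 * (D / w) + 3) by ring.
    apply Rmult_le_compat_l; nra. }
  replace ((2 * (D / w) + 3) * ((2 * K0 + 6) * eps))
    with ((2 * K0 + 6) * (2 * (eps * (D / w)) + 3 * eps)) by ring.
  assert (2 * (eps * (D / w)) + 3 * eps <= (64 * (K0 + 1) + 3) * beta) by nra.
  assert (Hpoly : (2 * K0 + 6) * (64 * (K0 + 1) + 3) <= 200 * (K0 + 2) ^ 2) by nra.
  assert ((2 * K0 + 6) * ((64 * (K0 + 1) + 3) * beta) <= 200 * (K0 + 2) ^ 2 * beta)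
    by (replace ((2 * K0 + 6) * ((64 * (K0 + 1) + 3) * beta))
          with ((2 * K0 + 6) * (64 * (K0 + 1) + 3) * beta) by ring;
        apply Rmult_le_compat_r; lra).
  assert ((2 * K0 + 6) * (2 * (eps * (D / w)) + 3 * eps) <= (2 * K0 + 6) * ((64 * (K0 + 1) + 3) * beta))
    by (apply Rmult_le_compat_l; lra).
  lra.
Qed.

Lemma count_realized_windows (TK : list (Z * Z)) : NoDup TK -> (forall z, In z TK -> realized z) ->
  INR (length TK) <= 400 * (K0 + 2) ^ 2 * beta.
Proof.
  intros HTK Hr.
  set (TKa := filter (fun z => decide (realized_on_side true z)) TK).
  set (TKd := filter (fun z => negb (decide (realized_on_side true z))) TK).
  assert (Hlen : length TK = (length TKa + length TKd)%nat) by (symmetry; apply filter_length).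
  assert (Ha : forall z, In z TKa -> realized_on_side true z)
    by (intros z Hz; apply filter_In in Hz as [_ Hz]; now apply decide_spec).
  assert (Hd : forall z, In z TKd -> realized_on_side false z).
  { intros z Hz. apply filter_In in Hz as [Hz Hnd]. apply Bool.negb_true_iff in Hnd.
    destruct (Hr z Hz) as [m [Pm Wm]]. exists m. do 2 (split; auto). cbn.
    destruct (Rle_lt_dec Kq (IZR a * IZR m ^ 2)) as [Hs|Hs]; [|lra].
    assert (Hcontra : decide (realized_on_side true z) = true)
      by (apply decide_spec; now exists m). congruence. }
  assert (Hbound : forall s (l : list (Z * Z)), NoDup l -> (forall z, In z l -> realized_on_side s z) ->
            INR (length l) <= 200 * (K0 + 2) ^ 2 * beta).
  { intros s l Hl Hs. destruct (Rlt_le_dec eps (1 / 2)) as [He|He].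
    - eapply Rle_trans; [apply (count_side s); auto | now apply side_count_bound].
    - eapply Rle_trans; [apply count_realized; auto | now apply spread_count_bound].
      intros z Hz. destruct (Hs z Hz) as [m [Pm [Wm _]]]. now exists m. }
  rewrite Hlen, plus_INR.
  pose proof (Hbound true TKa (NoDup_filter _ HTK) Ha).
  pose proof (Hbound false TKd (NoDup_filter _ HTK) Hd).
  lra.
Qed.

Lemma window_le_4W : w <= 4 * W.
Proof.
  pose proof w_bounds. pose proof q_bounds. pose proof Q_ge1.
  apply Rle_trans with (IZR Q ^ 2 * H / M).
  { apply Rle_trans with (IZR q * H * IZR Q / M); [lra|]. apply Rdiv_le_mono_r; [lra|]. nra. }
  unfold W. apply Rdiv_le_iff; [lra|].
  replace (4 * (M ^ 3 / (4 * X * IZR Q ^ 2)) * M) with (M ^ 4 / (X * IZR Q ^ 2))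
    by (field; repeat split; lra).
  apply Rle_div_iff; [apply Rmult_lt_0_compat; [|apply pow_lt]; lra|].
  replace (IZR Q ^ 2 * H * (X * IZR Q ^ 2)) with (IZR Q ^ 4 * (H * X)) by ring. lra.
Qed.

Lemma block_near_window (m : Z) :
  (block (m / window_width q * window_width q) <= block m
   <= block (m / window_width q * window_width q) + 4)%Z.
Proof.
  destruct Hadm as [Hq _]. pose proof (window_width_pos q ltac:(lia)) as Hw.
  pose proof (Zdiv_bounds m _ Hw) as [B1 B2]. pose proof W_pos. pose proof window_le_4W.
  set (m0 := (m / window_width q * window_width q)%Z).
  assert (Hm0 : IZR m0 = IZR (window_width q) * IZR (m / window_width q))
    by (unfold m0; rewrite mult_IZR; ring).
  split; [apply block_mono; unfold m0; rewrite Z.mul_comm; now apply Z.mul_div_le|].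
  pose proof (Int_part_bounds ((IZR m0 - M) / W)).
  assert (Hlt : (IZR m - M) / W < IZR (block m0 + 5)).
  { rewrite plus_IZR. unfold block.
    apply Rlt_le_trans with ((IZR m0 - M) / W + 4); [|lra].
    apply (Rmult_lt_reg_r W); auto.
    replace ((IZR m - M) / W * W) with (IZR m - M) by (field; lra).
    replace (((IZR m0 - M) / W + 4) * W) with (IZR m0 - M + 4 * W) by (field; lra).
    unfold w in *. lra. }
  apply Int_part_lt_iff in Hlt. unfold block at 1. lia.
Qed.

Definition line_window (i : cell) : Z * Z := (snd (fst (fst i)), snd (fst i)).

Lemma cells_le_windows :
  INR (length (cells q a)) <= 10 * INR (length (nodup pair_eq_dec (map line_window (cells q a)))).
Proof.
  set (TK := nodup pair_eq_dec (map line_window (cells q a))).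
  set (candidates := fun z : Z * Z =>
         flat_map (fun b => [(b, fst z, snd z, true); (b, fst z, snd z, false)])
                  (Zrange (block (snd z * window_width q)) 5)).
  assert (Hlen : length (flat_map candidates TK) = (10 * length TK)%nat).
  { apply length_flat_map_const. intros z. unfold candidates.
    rewrite (length_flat_map_const _ _ 2); [|reflexivity]. now rewrite length_Zrange. }
  assert (Hincl : (length (cells q a) <= length (flat_map candidates TK))%nat).
  { apply NoDup_incl_length; [apply NoDup_nodup|]. intros i Hi.
    apply in_flat_map. exists (line_window i). split; [apply nodup_In, in_map, Hi|].
    apply in_cells in Hi as [[m n] [_ [_ <-]]].
    unfold candidates, line_window, cell_of. cbn [fst snd].
    apply in_flat_map. exists (block m). split.
    - apply in_Zrange. pose proof (block_near_window m). lia.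
    - destruct (Z.leb _ _); cbn; auto. }
  rewrite Hlen in Hincl. apply le_INR in Hincl. rewrite mult_INR in Hincl. simpl in Hincl. lra.
Qed.

Lemma count_cells : INR (length (cells q a)) <= 4000 * (K0 + 2) ^ 2 * beta.
Proof.
  pose proof cells_le_windows.
  assert (INR (length (nodup pair_eq_dec (map line_window (cells q a))))
          <= 400 * (K0 + 2) ^ 2 * beta).
  { apply count_realized_windows; [apply NoDup_nodup|].
    intros z Hz. apply nodup_In, in_map_iff in Hz as [i [<- Hi]].
    apply in_cells in Hi as [[m n] [HS [Ha <-]]].
    exists m. split; [exists n; auto | reflexivity]. }
  lra.
Qed.

End Count.

Lemma AP_of_cells_exists : exists ap : Z * Z * cell -> (Z * Z) * nat, forall q a i,
  (exists p, in_cell q a i p) ->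
  (1 <= snd (ap (q, a, i)) <= L)%nat /\
  forall p, in_cell q a i p <-> in_AP (fst (ap (q, a, i))) (q, - a)%Z (snd (ap (q, a, i))) p.
Proof.
  destruct (choice (fun (x : Z * Z * cell) (y : (Z * Z) * nat) =>
      (exists p, in_cell (fst (fst x)) (snd (fst x)) (snd x) p) ->
      (1 <= snd y <= L)%nat /\
      forall p, in_cell (fst (fst x)) (snd (fst x)) (snd x) p
                <-> in_AP (fst y) (fst (fst x), - snd (fst x))%Z (snd y) p)) as [ap Hap].
  - intros [[q a] i]. cbn [fst snd].
    destruct (classic (exists p, in_cell q a i p)) as [He|He].
    + destruct (cell_is_AP q a i He) as [x0 [l Hl]]. now exists (x0, l).
    + exists ((0, 0)%Z, 0%nat). tauto.
  - exists ap. intros q a i. exact (Hap (q, a, i)).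
Qed.

Section Family.

Variable ap : Z * Z * cell -> (Z * Z) * nat.
Hypothesis ap_spec : forall q a i, (exists p, in_cell q a i p) ->
  (1 <= snd (ap (q, a, i)) <= L)%nat /\
  forall p, in_cell q a i p <-> in_AP (fst (ap (q, a, i))) (q, - a)%Z (snd (ap (q, a, i))) p.

Definition family (q a : Z) : list ((Z * Z) * nat) := map (fun i => ap (q, a, i)) (cells q a).

Lemma in_family (q a : Z) (e : (Z * Z) * nat) : In e (family q a) ->
  exists i, (1 <= snd e <= L)%nat /\ forall p, in_cell q a i p <-> in_AP (fst e) (q, - a)%Z (snd e) p.
Proof.
  unfold family. rewrite in_map_iff. intros [i [<- Hi]]. exists i.
  apply ap_spec, in_cells, Hi.
Qed.

Lemma family_NoDup (q a : Z) : NoDup (family q a).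
Proof.
  apply NoDup_map_NoDup_ForallPairs; [|apply NoDup_nodup].
  intros i j Hi Hj E.
  destruct (ap_spec q a i (proj1 (in_cells q a i) Hi)) as [Hl Hp].
  destruct (ap_spec q a j (proj1 (in_cells q a j) Hj)) as [_ Hp'].
  rewrite <- E in Hp'.
  pose proof (in_AP_start (fst (ap (q, a, i))) (q, - a)%Z _ (proj1 Hl)) as Hx.
  destruct (proj2 (Hp _) Hx) as [_ [_ <-]]. now destruct (proj2 (Hp' _) Hx) as [_ [_ <-]].
Qed.

Lemma family_length (q a : Z) : admissible (c_low K0) (c_high K0) X M Q q a ->
  INR (length (family q a)) <= 4000 * (K0 + 2) ^ 2 * M ^ 3 / (X * IZR Q ^ 2 * IZR q).
Proof.
  intros Hadm. unfold family. rewrite length_map.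
  pose proof (count_cells q a Hadm) as Hcount. pose proof (q_bounds q a Hadm). pose proof Q_ge1.
  replace (4000 * (K0 + 2) ^ 2 * M ^ 3 / (X * IZR Q ^ 2 * IZR q))
    with (4000 * (K0 + 2) ^ 2 * (M ^ 3 / (X * IZR Q ^ 2 * IZR q))) by (field; repeat split; lra).
  exact Hcount.
Qed.

Lemma family_members (q a : Z) (x0 : Z * Z) (l : nat) : In (x0, l) (family q a) ->
  (1 <= l)%nat /\ INR l <= H * IZR Q / M /\ forall p, in_AP x0 (q, - a)%Z l p -> in_S J X H p.
Proof.
  intros Hin. destruct (in_family q a _ Hin) as [i [Hl Hp]]. cbn in Hl, Hp.
  split; [lia|]. split.
  - apply Rle_trans with (INR L); [apply le_INR; lia | apply L_le].
  - intros p Hap. now apply Hp in Hap as [HS _].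
Qed.

Lemma family_covers (p : Z * Z) : in_S J X H p ->
  exists q a x0 l, admissible (c_low K0) (c_high K0) X M Q q a /\
    In (x0, l) (family q a) /\ in_AP x0 (q, - a)%Z l p.
Proof.
  intros HS. destruct (assign (block (fst p))) as [q a] eqn:Ha.
  assert (Hp : in_cell q a (cell_of q a p) p) by (repeat split; auto; apply HS).
  exists q, a, (fst (ap (q, a, cell_of q a p))), (snd (ap (q, a, cell_of q a p))).
  split; [exact (assign_admissible _ q a (in_S_range p HS) Ha)|].
  rewrite <- surjective_pairing. split.
  - apply (in_map (fun i => ap (q, a, i))), in_cells. eauto.
  - apply (ap_spec q a _ (ex_intro _ p Hp)), Hp.
Qed.

Lemma family_disjoint (q a q' a' : Z) (x0 x0' : Z * Z) (l l' : nat) (p : Z * Z) :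
  In (x0, l) (family q a) -> In (x0', l') (family q' a') ->
  in_AP x0 (q, - a)%Z l p -> in_AP x0' (q', - a')%Z l' p ->
  q = q' /\ a = a' /\ x0 = x0' /\ l = l'.
Proof.
  intros H1 H2 P1 P2.
  unfold family in H1, H2. apply in_map_iff in H1 as [i [E1 Hi]], H2 as [i' [E2 Hi']].
  destruct (ap_spec q a i (proj1 (in_cells q a i) Hi)) as [_ Hp].
  destruct (ap_spec q' a' i' (proj1 (in_cells q' a' i') Hi')) as [_ Hp'].
  rewrite E1 in Hp. rewrite E2 in Hp'. cbn in Hp, Hp'.
  destruct (proj2 (Hp p) P1) as [_ [Ha Hc]], (proj2 (Hp' p) P2) as [_ [Ha' Hc']].
  rewrite Ha in Ha'. injection Ha' as <- <-.
  assert (i = i') as <- by congruence.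
  rewrite E1 in E2. injection E2 as <- <-. auto.
Qed.

End Family.

End Assigned.

Lemma partition_exists :
  exists fam : Z -> Z -> list ((Z * Z) * nat),
    (forall q a, admissible (c_low K0) (c_high K0) X M Q q a ->
       NoDup (fam q a) /\
       INR (length (fam q a)) <= 4000 * (K0 + 2) ^ 2 * M ^ 3 / (X * IZR Q ^ 2 * IZR q) /\
       (forall x0 l, In (x0, l) (fam q a) ->
          (1 <= l)%nat /\ INR l <= H * IZR Q / M /\
          (forall p, in_AP x0 (q, - a)%Z l p -> in_S J X H p))) /\
    (forall p, in_S J X H p ->
       exists q a x0 l, admissible (c_low K0) (c_high K0) X M Q q a /\
         In (x0, l) (fam q a) /\ in_AP x0 (q, - a)%Z l p) /\
    (forall q a x0 l q' a' x0' l' p,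
       admissible (c_low K0) (c_high K0) X M Q q a -> admissible (c_low K0) (c_high K0) X M Q q' a' ->
       In (x0, l) (fam q a) -> In (x0', l') (fam q' a') ->
       in_AP x0 (q, - a)%Z l p -> in_AP x0' (q', - a')%Z l' p ->
       q = q' /\ a = a' /\ x0 = x0' /\ l = l').
Proof.
  destruct assignment_exists as [assign Hassign].
  destruct (AP_of_cells_exists assign Hassign) as [ap Hap].
  exists (family assign ap). split; [|split].
  - intros q a Hadm. split; [now apply family_NoDup|].
    split; [now apply family_length|]. intros x0 l. now apply family_members.
  - now apply family_covers.
  - intros q a x0 l q' a' x0' l' p _ _. now apply family_disjoint.
Qed.

End Partition.

Theorem theorem8p1 :
  forall C0 : R,
  exists c1 c2 C : R, (0 < c1 < c2)%R /\ (0 < C)%R /\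
  forall (X H M : R) (J : R -> Prop) (Q : Z),
    (1 <= X)%R -> (1 <= H)%R -> (1 <= M)%R ->
    (Rpower X (1/3) <= H)%R -> (H <= X)%R -> (M <= C0 * sqrt X)%R ->
    is_interval J -> (forall x, J x -> (M < x <= 2 * M)%R) ->
    (M / H <= IZR Q)%R -> (IZR Q <= M / Rpower (H * X) (1/4))%R ->
    exists fam : Z -> Z -> list ((Z * Z) * nat),
      (* each family: bounded size, progressions of spacing (q,-a), short, inside S *)
      (forall q a, admissible c1 c2 X M Q q a ->
         NoDup (fam q a) /\
         (INR (length (fam q a)) <= C * M ^ 3 / (X * IZR Q ^ 2 * IZR q))%R /\
         (forall x0 l, In (x0, l) (fam q a) ->
            (1 <= l)%nat /\ (INR l <= H * IZR Q / M)%R /\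
            (forall p, in_AP x0 (q, - a)%Z l p -> in_S J X H p))) /\
      (* the union covers S *)
      (forall p, in_S J X H p ->
         exists q a x0 l, admissible c1 c2 X M Q q a /\
           In (x0, l) (fam q a) /\ in_AP x0 (q, - a)%Z l p) /\
      (* the progressions are pairwise disjoint *)
      (forall q a x0 l q' a' x0' l' p,
         admissible c1 c2 X M Q q a -> admissible c1 c2 X M Q q' a' ->
         In (x0, l) (fam q a) -> In (x0', l') (fam q' a') ->
         in_AP x0 (q, - a)%Z l p -> in_AP x0' (q', - a')%Z l' p ->
         q = q' /\ a = a' /\ x0 = x0' /\ l = l').
Proof.
  intros C0.
  set (K0 := 4 * Rmax C0 1 ^ 2).
  assert (HK0 : 1 <= K0) by (unfold K0; pose proof (Rmax_r C0 1); nra).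
  exists (c_low K0), (c_high K0), (4000 * (K0 + 2) ^ 2).
  destruct (c_low_high_bounds K0 HK0) as [[Hc1 _] Hc12].
  split; [lra|]. split; [nra|].
  intros X H M J Q HX HH HM HXH _ HMX HJ HJM HQlo HQhi.
  replace (1 / 3) with (/ INR 3) in HXH by (simpl; field).
  replace (1 / 4) with (/ INR 4) in HQhi by (simpl; field).
  assert (HQ0 : 0 <= IZR Q) by (assert (0 < M / H) by (apply Rdiv_lt_0_compat; lra); lra).
  apply Rdiv_le_iff in HQlo; [|lra].
  apply partition_exists; auto.
  - pose proof (sq_le_of_le_mul_sqrt M C0 X ltac:(lra) ltac:(lra) HMX). unfold K0. lra.
  - apply le_pow_of_Rpower_inv_le in HXH; [exact HXH | lia | lra].
  - lra.
  - apply pow_mul_le_of_le_div_Rpower_inv in HQhi; [exact HQhi | lia | nra | exact HQ0].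
Qed.
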